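(* Let $\alpha,\beta$ be real numbers with $\beta\le\alpha<1$ and $\alpha>0$. Then the $\beta$-Ces\`aro operator $C_\beta$ maps $\mathcal{B}_\alpha^0$ into $\mathcal{B}_\alpha^0$ and is a bounded linear operator from $(\mathcal{B}_\alpha^0,\|\cdot\|_{\mathcal{B}_\alpha})$ to itself.
   Context: $\mathbb{D}=\{z\in\mathbb{C}:|z|<1\}$. For $\alpha>0$, the $\alpha$-Bloch space $\mathcal{B}_\alpha$ is the space of analytic functions $f$ on $\mathbb{D}$ with $\|f\|_{\mathcal{B}_\alpha}:=\sup_{z\in\mathbb{D}}(1-|z|^2)^\alpha|f'(z)|<\infty$. $\mathcal{B}_\alpha^0=\{f\in\mathcal{B}_\alpha: f(0)=0\}$, normed by $\|\cdot\|_{\mathcal{B}_\alpha}$. For $\beta\in\mathbb{R}$, the $\beta$-Ces\`aro operator is $C_\beta(f)(z)=\int_0^z \frac{f(w)}{w(1-w)^\beta}\,dw$ for analytic $f$ on $\mathbb{D}$ with $f(0)=0$, where $(1-w)^{\beta}$ is defined by the principal branch. *)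

From Stdlib Require Import Reals ClassicalEpsilon.
From Coquelicot Require Import Coquelicot.
Open Scope R_scope.

Definition in_disc (z : C) : Prop := Cmod z < 1.

Definition analytic_on_disc (f : C -> C) : Prop :=
  forall z : C, in_disc z -> ex_derive f z.

(* The complex derivative f'(z) (meaningful where f is differentiable). *)
Definition Cderiv (f : C -> C) (z : C) : C :=
  epsilon (inhabits (0%R, 0%R) : inhabited C) (fun l : C => is_derive f z l).

(* Principal argument, with values in (-PI, PI]; Arg 0 = 0. *)
Definition Arg (z : C) : R :=
  let x := fst z in let y := snd z in
  if Rlt_dec 0 x then atan (y / x)
  else if Rlt_dec x 0 then
    (if Rle_dec 0 y then atan (y / x) + PI else atan (y / x) - PI)
  else if Rlt_dec 0 y then PI / 2
  else if Rlt_dec y 0 then - (PI / 2)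
  else 0.

(* Principal branch of z^b = exp (b * Log z), Log z = ln|z| + i Arg z,
   for z <> 0 (z^b := 0 at z = 0; never used below since 1 - w <> 0 on D). *)
Definition cpow (z : C) (b : R) : C :=
  if Req_EM_T (Cmod z) 0 then (0%R, 0%R)
  else (Rpower (Cmod z) b * cos (b * Arg z), Rpower (Cmod z) b * sin (b * Arg z)).

Definition CRInt (g : R -> C) (a b : R) : C :=
  (RInt (fun t => fst (g t)) a b, RInt (fun t => snd (g t)) a b).

Definition seg_integral (h : C -> C) (z : C) : C :=
  CRInt (fun t => (h (RtoC t * z) * z)%C) 0 1.

Definition cesaro (beta : R) (f : C -> C) (z : C) : C :=
  seg_integral (fun w => (f w / (w * cpow (1 - w) beta))%C) z.

Definition bloch_weight (alpha : R) (f : C -> C) (z : C) : R :=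
  Rpower (1 - Cmod z ^ 2) alpha * Cmod (Cderiv f z).

Definition in_bloch (alpha : R) (f : C -> C) : Prop :=
  analytic_on_disc f /\
  exists M : R, forall z : C, in_disc z -> bloch_weight alpha f z <= M.

Definition in_bloch0 (alpha : R) (f : C -> C) : Prop :=
  in_bloch alpha f /\ f (0%R, 0%R) = (0%R, 0%R).

Definition bloch_norm (alpha : R) (f : C -> C) : R :=
  real (Lub_Rbar (fun x : R => exists z : C, in_disc z /\ x = bloch_weight alpha f z)).

(* [C_beta f] is the primitive vanishing at [0] of [q w = f w / (w (1 - w)^beta)],
   which is holomorphic on the punctured disc and, since [f 0 = 0], continuous at [0].
   Goursat's lemma on triangles with a vertex at [0] (after cutting off a small
   corner there) shows that the integral of [q] along rays from [0] is a primitive,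
   so [(C_beta f)' = q].  Integrating the Bloch bound
   [|f'(w)| <= ||f|| (1 - |w|^2)^-alpha] along the ray gives
   [|f z| <= ||f|| |z| / (1 - alpha)], hence
   [(1 - |z|^2)^alpha |q z| <= ||f|| / (1 - alpha) * (1 - |z|^2)^alpha / |1 - z|^beta],
   and the last factor is bounded on the disc because [beta <= alpha]. *)

From Stdlib Require Import Reals Lra Lia Psatz Arith ClassicalEpsilon.
From Coquelicot Require Import Coquelicot.
Open Scope R_scope.

(** * Complex differentiability *)

Definition Cdiff (f : C -> C) (x l : C) : Prop :=
  forall eps : R, 0 < eps -> exists delta : R, 0 < delta /\
    forall y : C, Cmod (y - x) < delta ->
      Cmod (f y - f x - l * (y - x)) <= eps * Cmod (y - x).

Definition Ccont (f : C -> C) (x : C) : Prop :=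
  forall eps : R, 0 < eps -> exists delta : R, 0 < delta /\
    forall y : C, Cmod (y - x) < delta -> Cmod (f y - f x) < eps.

Lemma Cdiff_is_derive (f : C -> C) (x l : C) : Cdiff f x l <-> is_derive f x l.
Proof.
  split.
  - intros H. split; [apply is_linear_scal_l|].
    intros x' Hx' eps.
    pose proof (@is_filter_lim_locally_unique _ (AbsRing_NormedModule C_AbsRing) x x' Hx') as <-.
    destruct (H eps (cond_pos eps)) as [d [Hd H1]].
    exists (mkposreal d Hd). intros y Hy.
    change (Cmod (f y - f x - (y - x) * l) <= eps * Cmod (y - x)).
    rewrite (Cmult_comm (y - x) l). exact (H1 y Hy).
  - intros [_ H] eps Heps.
    destruct (H x (fun P HP => HP) (mkposreal eps Heps)) as [d Hd].
    exists d. split; [apply cond_pos|]. intros y Hy.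
    specialize (Hd y Hy).
    change (Cmod (f y - f x - (y - x) * l) <= eps * Cmod (y - x)) in Hd.
    rewrite (Cmult_comm l (y - x)). exact Hd.
Qed.

(* Coquelicot's product and chain rules are stated for [C] as a normed module
   over itself, a structure distinct from (though equivalent to) [C_NormedModule]. *)
Lemma is_derive_C_ring (f : C -> C) (x l : C) :
  is_derive f x l <-> @is_derive C_AbsRing (AbsRing_NormedModule C_AbsRing) f x l.
Proof.
  split; intros [_ H]; split; try apply is_linear_scal_l; exact H.
Qed.

Lemma Cdiff_mult f g x a b :
  Cdiff f x a -> Cdiff g x b -> Cdiff (fun w => f w * g w)%C x (a * g x + f x * b)%C.
Proof.
  rewrite !Cdiff_is_derive, !is_derive_C_ring. intros Ha Hb.
  exact (is_derive_mult f g x a b Ha Hb Cmult_comm).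
Qed.

Lemma Cdiff_comp f g x a b :
  Cdiff f (g x) a -> Cdiff g x b -> Cdiff (fun w => f (g w)) x (b * a)%C.
Proof.
  rewrite !Cdiff_is_derive. intros Ha Hb. apply is_derive_C_ring in Hb.
  exact (is_derive_comp f g x a b Ha Hb).
Qed.

Lemma Cdiff_exact f x l : (forall y, (f y - f x)%C = (l * (y - x))%C) -> Cdiff f x l.
Proof.
  intros E eps He. exists 1. split; [lra|]. intros y _.
  rewrite E. replace (l * (y - x) - l * (y - x))%C with (RtoC 0) by ring.
  rewrite Cmod_0. pose proof (Cmod_ge_0 (y - x)). nra.
Qed.

Lemma Cdiff_scal c f x l : Cdiff f x l -> Cdiff (fun w => c * f w)%C x (c * l)%C.
Proof.
  intros H.
  assert (Hc : Cdiff (fun _ => c) x 0%C) by (apply Cdiff_exact; intros y; ring).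
  pose proof (Cdiff_mult _ _ x _ _ Hc H) as Hm. cbv beta in Hm.
  replace (c * l)%C with (0 * f x + c * l)%C by ring. exact Hm.
Qed.

Lemma Cdiff_ext_loc f g x l :
  (exists r, 0 < r /\ forall y, Cmod (y - x) < r -> f y = g y) -> Cdiff f x l -> Cdiff g x l.
Proof.
  intros [r [Hr E]] H eps He. destruct (H eps He) as [d [Hd H1]].
  exists (Rmin d r). split; [apply Rmin_pos; auto|]. intros y Hy.
  assert (Ex : f x = g x).
  { apply E. replace (x - x)%C with (RtoC 0) by ring. rewrite Cmod_0. exact Hr. }
  rewrite <- Ex, <- E by (eapply Rlt_le_trans; [exact Hy | apply Rmin_r]).
  apply H1. eapply Rlt_le_trans; [exact Hy | apply Rmin_l].
Qed.

Lemma Cmod_sub_ge (a b : C) : Cmod a - Cmod b <= Cmod (a - b).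
Proof.
  pose proof (Cmod_triangle (a - b) b) as H. replace (a - b + b)%C with a in H by ring. lra.
Qed.

Lemma Cmod_sub_sym (a b : C) : Cmod (a - b) = Cmod (b - a).
Proof. replace (a - b)%C with (- (b - a))%C by ring. apply Cmod_opp. Qed.

Lemma Cmult_neq_0 (a b : C) : a <> 0%C -> b <> 0%C -> (a * b)%C <> 0%C.
Proof.
  intros Ha Hb E. apply Cmod_gt_0 in Ha. apply Cmod_gt_0 in Hb.
  pose proof (Cmod_mult a b) as H. rewrite E, Cmod_0 in H. nra.
Qed.

Lemma Cdiff_inv (w : C) : w <> 0%C -> Cdiff Cinv w (- / (w * w))%C.
Proof.
  intros Hw eps He.
  assert (Hm : 0 < Cmod w) by (apply Cmod_gt_0; auto).
  exists (Rmin (Cmod w / 2) (eps * Cmod w ^ 3 / 2)). split.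
  { apply Rmin_pos; [lra|]. pose proof (pow_lt _ 3 Hm). nra. }
  intros y Hy.
  assert (Hy1 : Cmod (y - w) < Cmod w / 2) by (eapply Rlt_le_trans; [exact Hy | apply Rmin_l]).
  assert (Hy2 : Cmod (y - w) < eps * Cmod w ^ 3 / 2)
    by (eapply Rlt_le_trans; [exact Hy | apply Rmin_r]).
  assert (Hyw : Cmod w / 2 <= Cmod y)
    by (pose proof (Cmod_sub_ge w y) as H; rewrite (Cmod_sub_sym w y) in H; lra).
  assert (Hy0 : y <> 0%C) by (intros ->; rewrite Cmod_0 in Hyw; lra).
  replace (/ y - / w - - / (w * w) * (y - w))%C with ((y - w) * (y - w) * / (y * (w * w)))%C
    by (field; split; auto).
  rewrite !Cmod_mult, Cmod_inv, !Cmod_mult by (repeat apply Cmult_neq_0; auto).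
  set (d := Cmod (y - w)) in *. set (m := Cmod w) in *.
  assert (0 <= d) by apply Cmod_ge_0.
  (* [|y w^2| >= m^3 / 2] and [d <= eps m^3 / 2] *)
  apply Rle_trans with (d * d * / (m / 2 * (m * m))).
  { apply Rmult_le_compat_l; [nra|]. apply Rinv_le_contravar; [nra|].
    apply Rmult_le_compat_r; nra. }
  replace (d * d * / (m / 2 * (m * m))) with (d * (2 * d / m ^ 3)) by (field; lra).
  rewrite Rmult_comm. apply Rmult_le_compat_r; [lra|].
  apply Rmult_le_reg_r with (m ^ 3); [apply pow_lt; auto|].
  replace (2 * d / m ^ 3 * m ^ 3) with (2 * d) by (field; lra). lra.
Qed.

Lemma Cdiff_cont f x l : Cdiff f x l -> Ccont f x.
Proof.
  intros H eps He. destruct (H 1 Rlt_0_1) as [d [Hd H1]].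
  pose proof (Cmod_ge_0 l).
  exists (Rmin d (eps / (Cmod l + 2))). split; [apply Rmin_pos; auto; apply Rdiv_lt_0_compat; lra|].
  intros y Hy.
  assert (Hy1 : Cmod (y - x) < d) by (eapply Rlt_le_trans; [exact Hy | apply Rmin_l]).
  assert (Hy2 : Cmod (y - x) * (Cmod l + 2) < eps).
  { apply Rlt_le_trans with (eps / (Cmod l + 2) * (Cmod l + 2)); [|right; field; lra].
    apply Rmult_lt_compat_r; [lra|]. eapply Rlt_le_trans; [exact Hy | apply Rmin_r]. }
  specialize (H1 y Hy1).
  replace (f y - f x)%C with ((f y - f x - l * (y - x)) + l * (y - x))%C by ring.
  eapply Rle_lt_trans; [apply Cmod_triangle|]. rewrite Cmod_mult.
  pose proof (Cmod_ge_0 (y - x)). nra.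
Qed.

Lemma Ccont_minus f g x : Ccont f x -> Ccont g x -> Ccont (fun w => f w - g w)%C x.
Proof.
  intros Hf Hg eps He.
  destruct (Hf (eps / 2)) as [d1 [Hd1 H1]]; [lra|].
  destruct (Hg (eps / 2)) as [d2 [Hd2 H2]]; [lra|].
  exists (Rmin d1 d2). split; [apply Rmin_pos; auto|]. intros y Hy.
  specialize (H1 y (Rlt_le_trans _ _ _ Hy (Rmin_l _ _))).
  specialize (H2 y (Rlt_le_trans _ _ _ Hy (Rmin_r _ _))).
  replace (f y - g y - (f x - g x))%C with ((f y - f x) + - (g y - g x))%C by ring.
  eapply Rle_lt_trans; [apply Cmod_triangle|]. rewrite Cmod_opp. lra.
Qed.

Lemma Ccont_mult f g x : Ccont f x -> Ccont g x -> Ccont (fun w => f w * g w)%C x.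
Proof.
  intros Hf Hg eps He.
  set (K := Cmod (f x) + Cmod (g x) + 1).
  assert (HK : 0 < K) by (unfold K; pose proof (Cmod_ge_0 (f x)); pose proof (Cmod_ge_0 (g x)); lra).
  set (e := Rmin 1 (eps / (2 * K))).
  assert (He0 : 0 < e) by (apply Rmin_pos; [lra | apply Rdiv_lt_0_compat; lra]).
  destruct (Hf e He0) as [d1 [Hd1 H1]]. destruct (Hg e He0) as [d2 [Hd2 H2]].
  exists (Rmin d1 d2). split; [apply Rmin_pos; auto|]. intros y Hy.
  specialize (H1 y (Rlt_le_trans _ _ _ Hy (Rmin_l _ _))).
  specialize (H2 y (Rlt_le_trans _ _ _ Hy (Rmin_r _ _))).
  assert (He1 : e <= 1) by apply Rmin_l. assert (He2 : e * (2 * K) <= eps).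
  { apply Rle_trans with (eps / (2 * K) * (2 * K)); [|right; field; lra].
    apply Rmult_le_compat_r; [lra | apply Rmin_r]. }
  replace (f y * g y - f x * g x)%C with ((f y - f x) * g y + f x * (g y - g x))%C by ring.
  assert (Hgy : Cmod (g y) <= Cmod (g x) + 1).
  { replace (g y) with ((g y - g x) + g x)%C by ring.
    eapply Rle_trans; [apply Cmod_triangle | lra]. }
  eapply Rle_lt_trans; [apply Cmod_triangle|]. rewrite !Cmod_mult.
  pose proof (Cmod_ge_0 (f y - f x)). pose proof (Cmod_ge_0 (f x)). pose proof (Cmod_ge_0 (g y)).
  assert (Cmod (f y - f x) * Cmod (g y) <= e * (Cmod (g x) + 1)) by (apply Rmult_le_compat; lra).
  assert (Cmod (f x) * Cmod (g y - g x) <= Cmod (f x) * e)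
    by (apply Rmult_le_compat_l; lra).
  unfold K in *. nra.
Qed.

Lemma Ccont_bounded_near q x :
  Ccont q x -> exists r M, 0 < r /\ forall w, Cmod (w - x) < r -> Cmod (q w) <= M.
Proof.
  intros H. destruct (H 1 Rlt_0_1) as [r [Hr Hq]]. exists r, (Cmod (q x) + 1). split; [exact Hr|].
  intros w Hw. specialize (Hq w Hw).
  replace (q w) with ((q w - q x) + q x)%C by ring.
  eapply Rle_trans; [apply Cmod_triangle | lra].
Qed.

(** * Elementary real estimates *)

Lemma Rabs_sub_le_of_deriv (f df : R -> R) (a b M : R) :
  (forall x, Rmin a b <= x <= Rmax a b -> derivable_pt_lim f x (df x)) ->
  (forall x, Rmin a b <= x <= Rmax a b -> Rabs (df x) <= M) ->
  Rabs (f b - f a) <= M * Rabs (b - a).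
Proof.
  intros Hd Hb.
  destruct (MVT_gen f a b df) as [c [Hc E]].
  - intros x Hx. apply is_derive_Reals, Hd. lra.
  - intros x Hx. apply derivable_continuous_pt. exists (df x). exact (Hd x Hx).
  - rewrite E, Rabs_mult. apply Rmult_le_compat_r; [apply Rabs_pos | exact (Hb c Hc)].
Qed.

Lemma Rabs_sub0_le_of_deriv (f df : R -> R) (x M : R) :
  (forall y, derivable_pt_lim f y (df y)) ->
  (forall y, Rabs y <= Rabs x -> Rabs (df y) <= M) ->
  Rabs (f x - f 0) <= M * Rabs x.
Proof.
  intros Hd Hb. replace (Rabs x) with (Rabs (x - 0)) by (rewrite Rminus_0_r; reflexivity).
  apply (Rabs_sub_le_of_deriv f df); [intros; apply Hd|].
  intros y Hy. apply Hb. unfold Rmin, Rmax in Hy.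
  destruct (Rle_dec 0 x); unfold Rabs; destruct (Rcase_abs y), (Rcase_abs x); lra.
Qed.

Lemma Rabs_sin_le x : Rabs (sin x) <= Rabs x.
Proof.
  pose proof (Rabs_sub0_le_of_deriv sin cos x 1 derivable_pt_lim_sin) as H.
  rewrite sin_0, Rminus_0_r, Rmult_1_l in H. apply H.
  intros y _. apply Rabs_le. pose proof (COS_bound y). lra.
Qed.

Lemma Rabs_cos_sub1_le x : Rabs (cos x - 1) <= x ^ 2.
Proof.
  pose proof (Rabs_sub0_le_of_deriv cos (fun y => - sin y) x (Rabs x) derivable_pt_lim_cos) as H.
  rewrite cos_0 in H. rewrite <- pow2_abs. replace (Rabs x ^ 2) with (Rabs x * Rabs x) by ring.
  apply H.
  intros y Hy. rewrite Rabs_Ropp. eapply Rle_trans; [apply Rabs_sin_le | exact Hy].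
Qed.

Lemma Rabs_sin_sub_le x : Rabs x <= 1 -> Rabs (sin x - x) <= x ^ 2.
Proof.
  intros Hx.
  pose proof (Rabs_sub0_le_of_deriv (fun y => sin y - y) (fun y => cos y - 1) x (Rabs x)) as H.
  cbv beta in H. rewrite sin_0, !Rminus_0_r in H. rewrite <- pow2_abs.
  replace (Rabs x ^ 2) with (Rabs x * Rabs x) by ring. apply H.
  - intros y. apply derivable_pt_lim_minus; [apply derivable_pt_lim_sin | apply derivable_pt_lim_id].
  - intros y Hy. eapply Rle_trans; [apply Rabs_cos_sub1_le|].
    rewrite <- pow2_abs. pose proof (Rabs_pos y). simpl. nra.
Qed.

Lemma exp_le_of_le x y : x <= y -> exp x <= exp y.
Proof. intros H. destruct (Req_dec x y) as [->|N]; [lra|]. left. apply exp_increasing. lra. Qed.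

Lemma exp_le_3_of_le1 x : x <= 1 -> exp x <= 3.
Proof. intros Hx. eapply Rle_trans; [apply exp_le_of_le, Hx | apply exp_le_3]. Qed.

Lemma Rabs_exp_sub1_le x : Rabs x <= 1 -> Rabs (exp x - 1) <= 3 * Rabs x.
Proof.
  intros Hx. pose proof (Rabs_sub0_le_of_deriv exp exp x 3 derivable_pt_lim_exp) as H.
  rewrite exp_0 in H. apply H.
  intros y Hy. rewrite Rabs_pos_eq by (left; apply exp_pos).
  apply exp_le_3_of_le1. apply Rabs_le_between. lra.
Qed.

Lemma Rabs_exp_sub2_le x : Rabs x <= 1 -> Rabs (exp x - 1 - x) <= 3 * x ^ 2.
Proof.
  intros Hx.
  pose proof (Rabs_sub0_le_of_deriv (fun y => exp y - y) (fun y => exp y - 1) x (3 * Rabs x)) as H.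
  cbv beta in H. rewrite exp_0, Rminus_0_r in H. replace (exp x - 1 - x) with (exp x - x - 1) by ring.
  rewrite <- pow2_abs. replace (3 * Rabs x ^ 2) with (3 * Rabs x * Rabs x) by ring. apply H.
  - intros y. apply derivable_pt_lim_minus; [apply derivable_pt_lim_exp | apply derivable_pt_lim_id].
  - intros y Hy. eapply Rle_trans; [apply Rabs_exp_sub1_le; lra | lra].
Qed.

Lemma Rabs_snd_le (z : C) : Rabs (snd z) <= Cmod z.
Proof. eapply Rle_trans; [apply Rmax_r | apply Rmax_Cmod]. Qed.

Lemma fst_le_Cmod (u : C) : fst u <= Cmod u.
Proof. eapply Rle_trans; [apply Rle_abs | apply re_le_Cmod]. Qed.

Lemma Cmod_le_sum (z : C) : Cmod z <= Rabs (fst z) + Rabs (snd z).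
Proof.
  pose proof (Rabs_pos (fst z)). pose proof (Rabs_pos (snd z)).
  unfold Cmod. rewrite <- (sqrt_pow2 (Rabs (fst z) + Rabs (snd z))) by lra.
  apply sqrt_le_1_alt. rewrite <- (pow2_abs (fst z)), <- (pow2_abs (snd z)). nra.
Qed.

Lemma Cmod_sq (u : C) : Cmod u * Cmod u = fst u ^ 2 + snd u ^ 2.
Proof. rewrite <- Cmod2_alt. ring. Qed.

Lemma Cmod_polar (r t : R) : 0 <= r -> Cmod (r * cos t, r * sin t) = r.
Proof.
  intros Hr. transitivity (sqrt (r ^ 2)); [|apply sqrt_pow2; exact Hr].
  unfold Cmod. f_equal.
  pose proof (sin2_cos2 t) as S. unfold Rsqr in S. simpl. nra.
Qed.

(** * Exponential, logarithm and the principal power [(1 - w)^beta] *)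

Definition cexp (z : C) : C := (exp (fst z) * cos (snd z), exp (fst z) * sin (snd z)).

Lemma cexp_add (a b : C) : cexp (a + b)%C = (cexp a * cexp b)%C.
Proof.
  unfold cexp. apply injective_projections; simpl; rewrite exp_plus;
    [rewrite cos_plus | rewrite sin_plus]; ring.
Qed.

Lemma cexp_taylor1 (k : C) : Cmod k <= 1 -> Cmod (cexp k - 1 - k)%C <= 12 * Cmod k ^ 2.
Proof.
  intros Hk. eapply Rle_trans; [apply Cmod_le_sum|].
  pose proof (re_le_Cmod k) as Ha. pose proof (Rabs_snd_le k) as Hb.
  destruct k as [a b]. simpl in *. set (m := Cmod (a, b)) in *.
  assert (Hea : exp a <= 3) by (apply exp_le_3_of_le1; apply Rabs_le_between in Ha; lra).
  assert (Hep : 0 < exp a) by apply exp_pos.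
  pose proof (Rabs_exp_sub2_le a ltac:(lra)) as H1. pose proof (Rabs_cos_sub1_le b) as H2.
  pose proof (Rabs_sin_sub_le b ltac:(lra)) as H3. pose proof (Rabs_exp_sub1_le a ltac:(lra)) as H4.
  replace (exp a * cos b + - (1) + - a) with ((exp a - 1 - a) + exp a * (cos b - 1)) by ring.
  replace (exp a * sin b + - (0) + - b) with (exp a * (sin b - b) + (exp a - 1) * b) by ring.
  eapply Rle_trans; [apply Rplus_le_compat; apply Rabs_triang|].
  rewrite !Rabs_mult, (Rabs_pos_eq (exp a)) by lra.
  rewrite <- (pow2_abs a) in H1. rewrite <- (pow2_abs b) in H2, H3.
  pose proof (Rabs_pos a). pose proof (Rabs_pos b). pose proof (Rabs_pos (cos b - 1)).
  pose proof (Rabs_pos (sin b - b)). pose proof (Rabs_pos (exp a - 1)).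
  assert (Rabs a * Rabs a <= m * m) by nra. assert (Rabs b * Rabs b <= m * m) by nra.
  assert (Rabs a * Rabs b <= m * m) by nra.
  assert (exp a * Rabs (cos b - 1) <= 3 * (Rabs b * Rabs b)) by nra.
  assert (exp a * Rabs (sin b - b) <= 3 * (Rabs b * Rabs b)) by nra.
  assert (Rabs (exp a - 1) * Rabs b <= 3 * Rabs a * Rabs b) by nra.
  lra.
Qed.

Lemma Cdiff_cexp (z : C) : Cdiff cexp z (cexp z).
Proof.
  intros eps He.
  set (M := Cmod (cexp z)). assert (HM : 0 <= M) by apply Cmod_ge_0.
  exists (Rmin 1 (eps / (12 * M + 1))). split; [apply Rmin_pos; [lra | apply Rdiv_lt_0_compat; lra]|].
  intros y Hy.
  assert (Hy1 : Cmod (y - z) < 1) by (eapply Rlt_le_trans; [exact Hy | apply Rmin_l]).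
  assert (Hy2 : Cmod (y - z) * (12 * M + 1) < eps).
  { apply Rlt_le_trans with (eps / (12 * M + 1) * (12 * M + 1)); [|right; field; lra].
    apply Rmult_lt_compat_r; [lra|]. eapply Rlt_le_trans; [exact Hy | apply Rmin_r]. }
  replace (cexp y - cexp z - cexp z * (y - z))%C with (cexp z * (cexp (y - z) - 1 - (y - z)))%C.
  2:{ replace (cexp y) with (cexp (z + (y - z))%C) by (f_equal; ring). rewrite cexp_add. ring. }
  rewrite Cmod_mult. fold M.
  pose proof (cexp_taylor1 (y - z) ltac:(lra)) as HE.
  set (d := Cmod (y - z)) in *. assert (0 <= d) by apply Cmod_ge_0.
  apply Rle_trans with (M * (12 * d ^ 2)); [apply Rmult_le_compat_l; auto|]. nra.
Qed.

(* The principal logarithm on the right half-plane [0 < Re u]. *)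
Definition clog (u : C) : C := (ln (Cmod u), atan (snd u / fst u)).

Lemma cexp_clog (u : C) : 0 < fst u -> cexp (clog u) = u.
Proof.
  intros Hx. pose proof (fst_le_Cmod u) as Hm. pose proof (Cmod_sq u) as Hs.
  unfold cexp, clog. simpl. rewrite exp_ln by lra. rewrite cos_atan, sin_atan.
  destruct u as [x y]. simpl in *. set (m := Cmod (x, y)) in *.
  assert (E : sqrt (1 + (y / x)²) = m / x).
  { rewrite <- (sqrt_pow2 (m / x)) by (apply Rlt_le, Rdiv_lt_0_compat; lra).
    f_equal. unfold Rsqr. field_simplify_eq; [nra | lra]. }
  rewrite E. apply injective_projections; simpl; field; lra.
Qed.

Lemma Rabs_ln_sub_le (u v : C) : 0 < fst u -> Cmod (v - u) <= fst u / 2 ->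
  Rabs (ln (Cmod v) - ln (Cmod u)) <= 2 / fst u * Cmod (v - u).
Proof.
  intros Hx Hd.
  assert (Hm : Rabs (Cmod v - Cmod u) <= Cmod (v - u)).
  { apply Rabs_le. pose proof (Cmod_sub_ge v u). pose proof (Cmod_sub_ge u v).
    rewrite (Cmod_sub_sym u v) in *. lra. }
  assert (Hmu : fst u <= Cmod u) by apply fst_le_Cmod.
  eapply Rle_trans; [apply (Rabs_sub_le_of_deriv ln (fun t => / t)) with (M := 2 / fst u)|].
  - intros t Ht. apply derivable_pt_lim_ln. unfold Rmin, Rmax in Ht.
    apply Rabs_le_between in Hm. destruct Rle_dec in Ht; lra.
  - intros t Ht. unfold Rmin, Rmax in Ht. apply Rabs_le_between in Hm.
    assert (fst u / 2 <= t) by (destruct Rle_dec in Ht; lra).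
    rewrite Rabs_pos_eq by (left; apply Rinv_0_lt_compat; lra).
    replace (2 / fst u) with (/ (fst u / 2)) by (field; lra). apply Rinv_le_contravar; lra.
  - apply Rmult_le_compat_l; [apply Rlt_le, Rdiv_lt_0_compat|]; lra.
Qed.

Lemma Rabs_atan_sub_le (x y : R) : Rabs (atan y - atan x) <= Rabs (y - x).
Proof.
  rewrite <- (Rmult_1_l (Rabs (y - x))).
  apply (Rabs_sub_le_of_deriv atan (fun t => / (1 + t ^ 2))).
  - intros t _. apply derivable_pt_lim_atan.
  - intros t _. rewrite Rabs_pos_eq by (left; apply Rinv_0_lt_compat; nra).
    rewrite <- Rinv_1. apply Rinv_le_contravar; nra.
Qed.

Lemma Rabs_slope_sub_le (u v : C) : 0 < fst u -> Cmod (v - u) <= fst u / 2 ->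
  Rabs (snd v / fst v - snd u / fst u) <= 4 * Cmod u / fst u ^ 2 * Cmod (v - u).
Proof.
  intros Hx Hd. set (d := Cmod (v - u)) in *.
  pose proof (re_le_Cmod (v - u)) as Hfd. pose proof (Rabs_snd_le (v - u)) as Hsd.
  simpl in Hfd, Hsd. fold d in Hfd, Hsd.
  assert (Hxv : fst u / 2 <= fst v) by (apply Rabs_le_between in Hfd; lra).
  replace (snd v / fst v - snd u / fst u) with
    ((fst u * (snd v - snd u) - snd u * (fst v - fst u)) / (fst u * fst v)) by (field; lra).
  rewrite Rabs_div, (Rabs_pos_eq (fst u * fst v)) by nra.
  pose proof (Rabs_snd_le u). pose proof (re_le_Cmod u).
  assert (Hnum : Rabs (fst u * (snd v - snd u) - snd u * (fst v - fst u)) <= 2 * Cmod u * d).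
  { eapply Rle_trans; [apply Rabs_triang|]. rewrite Rabs_Ropp, !Rabs_mult.
    pose proof (Rabs_pos (snd u)). pose proof (Rabs_pos (fst u)).
    pose proof (Rabs_pos (fst v - fst u)). pose proof (Rabs_pos (snd v - snd u)).
    assert (Rabs (fst u) * Rabs (snd v - snd u) <= Cmod u * d) by (apply Rmult_le_compat; auto).
    assert (Rabs (snd u) * Rabs (fst v - fst u) <= Cmod u * d) by (apply Rmult_le_compat; auto).
    lra. }
  apply Rle_trans with (2 * Cmod u * d / (fst u * (fst u / 2))).
  - unfold Rdiv. apply Rmult_le_compat; [apply Rabs_pos | left; apply Rinv_0_lt_compat; nra | exact Hnum|].
    apply Rinv_le_contravar; nra.
  - right. field. lra.
Qed.

Lemma clog_lipschitz (u v : C) : 0 < fst u -> Cmod (v - u) <= fst u / 2 ->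
  Cmod (clog v - clog u) <= (2 / fst u + 4 * Cmod u / fst u ^ 2) * Cmod (v - u).
Proof.
  intros Hx Hd. eapply Rle_trans; [apply Cmod_le_sum|]. simpl.
  pose proof (Rabs_ln_sub_le u v Hx Hd).
  pose proof (Rabs_atan_sub_le (snd u / fst u) (snd v / fst v)).
  pose proof (Rabs_slope_sub_le u v Hx Hd).
  replace (fst u * (fst u * 1)) with (fst u ^ 2) by ring. unfold Rminus in *. lra.
Qed.

(* Inverse-function argument: [v = u * cexp h] with [h = clog v - clog u], so the
   Taylor bound for [cexp] at [h], which is O(|v - u|), controls the remainder. *)
Lemma Cdiff_clog (u : C) : 0 < fst u -> Cdiff clog u (/ u)%C.
Proof.
  intros Hx eps He.
  assert (Hmu : 0 < Cmod u) by (pose proof (fst_le_Cmod u); lra).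
  set (L := 2 / fst u + 4 * Cmod u / fst u ^ 2).
  assert (HL : 0 < L).
  { unfold L. apply Rplus_lt_0_compat; apply Rdiv_lt_0_compat; try apply pow_lt; lra. }
  set (delta := Rmin (fst u / 2) (Rmin (/ L) (eps / (12 * L ^ 2 + 1)))).
  exists delta. split.
  { apply Rmin_pos; [lra|]. apply Rmin_pos; [apply Rinv_0_lt_compat; auto|].
    apply Rdiv_lt_0_compat; nra. }
  intros v Hv. set (d := Cmod (v - u)) in *. assert (0 <= d) by apply Cmod_ge_0.
  assert (H1 : d <= fst u / 2) by (left; eapply Rlt_le_trans; [exact Hv | apply Rmin_l]).
  assert (H2 : L * d <= 1).
  { apply Rle_trans with (L * / L); [|right; field; lra]. apply Rmult_le_compat_l; [lra|].
    left. eapply Rlt_le_trans; [exact Hv|]. eapply Rle_trans; [apply Rmin_r | apply Rmin_l]. }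
  assert (H3 : d * (12 * L ^ 2 + 1) <= eps).
  { apply Rle_trans with (eps / (12 * L ^ 2 + 1) * (12 * L ^ 2 + 1)); [|right; field; nra].
    apply Rmult_le_compat_r; [nra|]. left. eapply Rlt_le_trans; [exact Hv|].
    eapply Rle_trans; [apply Rmin_r | apply Rmin_r]. }
  assert (Hxv : 0 < fst v).
  { pose proof (re_le_Cmod (v - u)) as Hf. simpl in Hf. apply Rabs_le_between in Hf.
    fold d in Hf. lra. }
  pose proof (clog_lipschitz u v Hx H1) as Hl. fold L d in Hl.
  set (h := (clog v - clog u)%C) in *.
  assert (Hv' : v = (u * cexp h)%C).
  { rewrite <- (cexp_clog v Hxv) at 1. rewrite <- (cexp_clog u Hx) at 1. rewrite <- cexp_add.
    f_equal. unfold h. ring. }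
  change (Cmod (h - / u * (v - u))%C <= eps * d).
  replace (h - / u * (v - u))%C with (- (cexp h - 1 - h))%C
    by (rewrite Hv'; field; apply Cmod_gt_0; lra).
  rewrite Cmod_opp. eapply Rle_trans; [apply cexp_taylor1; lra|].
  pose proof (Cmod_ge_0 h).
  apply Rle_trans with (12 * (L * d) ^ 2); [apply Rmult_le_compat_l; [lra | apply pow_incr; lra]|].
  nra.
Qed.

Lemma Rpower_pos x y : 0 < Rpower x y.
Proof. apply exp_pos. Qed.

Lemma Rpower_1_base c : Rpower 1 c = 1.
Proof. unfold Rpower. rewrite ln_1, Rmult_0_r. apply exp_0. Qed.

Lemma Cmod_cpow (z : C) (beta : R) : Cmod z <> 0 -> Cmod (cpow z beta) = Rpower (Cmod z) beta.
Proof.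
  intros H. unfold cpow. destruct (Req_EM_T (Cmod z) 0); [contradiction|].
  apply Cmod_polar. left. apply Rpower_pos.
Qed.

Lemma cpow_neq_0 (z : C) (beta : R) : z <> 0%C -> cpow z beta <> 0%C.
Proof.
  intros Hz E. apply Cmod_gt_0 in Hz.
  pose proof (Cmod_cpow z beta ltac:(lra)) as H. rewrite E, Cmod_0 in H.
  pose proof (Rpower_pos (Cmod z) beta). lra.
Qed.

Lemma cpow_1 (beta : R) : cpow 1%C beta = 1%C.
Proof.
  unfold cpow, Arg. rewrite Cmod_1. destruct (Req_EM_T 1 0); [lra|].
  simpl. destruct (Rlt_dec 0 1); [|lra].
  rewrite Rpower_1_base. replace (0 / 1) with 0 by field. rewrite atan_0, Rmult_0_r, cos_0, sin_0.
  apply injective_projections; simpl; ring.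
Qed.

Lemma cpow_eq_cexp_clog (u : C) (beta : R) : 0 < fst u -> cpow u beta = cexp (RtoC beta * clog u).
Proof.
  intros Hx. assert (Hm : 0 < Cmod u) by (pose proof (fst_le_Cmod u); lra).
  unfold cpow, cexp, clog, Arg.
  destruct (Req_EM_T (Cmod u) 0); [lra|]. destruct (Rlt_dec 0 (fst u)); [|lra].
  unfold Rpower. simpl. rewrite !Rmult_0_l, Rminus_0_r, Rplus_0_r. reflexivity.
Qed.

Lemma in_disc_re_1_sub (w : C) : in_disc w -> 0 < fst (1 - w)%C.
Proof. unfold in_disc. intros H. pose proof (fst_le_Cmod w). simpl. lra. Qed.

Lemma cpow_1_sub_neq_0 (beta : R) (w : C) : in_disc w -> cpow (1 - w) beta <> 0%C.
Proof.
  intros Hw. apply cpow_neq_0. intros E. pose proof (in_disc_re_1_sub w Hw) as H.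
  rewrite E in H. simpl in H. lra.
Qed.

Lemma Cdiff_cpow_1_sub (beta : R) (w : C) :
  in_disc w -> exists l, Cdiff (fun y => cpow (1 - y) beta) w l.
Proof.
  intros Hw. pose proof (in_disc_re_1_sub w Hw) as Hre. eexists.
  apply Cdiff_ext_loc with (f := fun y => cexp (RtoC beta * clog (1 - y))%C).
  - exists (fst (1 - w)%C). split; [exact Hre|]. intros y Hy.
    symmetry. apply cpow_eq_cexp_clog.
    pose proof (re_le_Cmod (y - w)) as H. simpl in *. apply Rabs_le_between in H. lra.
  - apply (Cdiff_comp cexp (fun y => RtoC beta * clog (1 - y))%C); [apply Cdiff_cexp|].
    apply Cdiff_scal, (Cdiff_comp clog (fun y => 1 - y)%C); [apply Cdiff_clog; exact Hre|].
    apply Cdiff_exact with (l := (- (1))%C). intros y. ring.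
Qed.

(** * Integrals along segments *)

Ltac C_field := apply injective_projections; simpl;
  match goal with |- @eq _ ?x ?y => change (@eq R x y) end;
  repeat (progress (unfold minus, plus, opp, scal, mult; simpl)); field.

Lemma Cmod_convex (x y a : C) (s : R) : 0 <= s <= 1 ->
  Cmod (x + RtoC s * (y - x) - a)%C <= (1 - s) * Cmod (x - a) + s * Cmod (y - a).
Proof.
  intros Hs.
  replace (x + RtoC s * (y - x) - a)%C with (RtoC (1 - s) * (x - a) + RtoC s * (y - a))%C by C_field.
  eapply Rle_trans; [apply Cmod_triangle|]. rewrite !Cmod_mult, !Cmod_R, !Rabs_pos_eq by lra. lra.
Qed.

Lemma Cmod_convex0 (x y : C) (s : R) : 0 <= s <= 1 ->
  Cmod (x + RtoC s * (y - x))%C <= (1 - s) * Cmod x + s * Cmod y.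
Proof.
  intros Hs. pose proof (Cmod_convex x y 0 s Hs) as H.
  replace (x - 0)%C with x in H by ring. replace (y - 0)%C with y in H by ring.
  replace (x + RtoC s * (y - x) - 0)%C with (x + RtoC s * (y - x))%C in H by ring. exact H.
Qed.

Lemma Cmod_convex_lt (x y : C) (s r : R) :
  0 <= s <= 1 -> Cmod x < r -> Cmod y < r -> Cmod (x + RtoC s * (y - x))%C < r.
Proof.
  intros Hs Hx Hy. eapply Rle_lt_trans; [apply Cmod_convex0; exact Hs|].
  destruct (Req_dec s 0) as [->|Hs0]; [lra|].
  assert (s * Cmod y < s * r) by (apply Rmult_lt_compat_l; lra).
  assert ((1 - s) * Cmod x <= (1 - s) * r) by (apply Rmult_le_compat_l; lra).
  lra.
Qed.

Lemma in_disc_convex (x y : C) (s : R) :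
  0 <= s <= 1 -> in_disc x -> in_disc y -> in_disc (x + RtoC s * (y - x))%C.
Proof. apply Cmod_convex_lt. Qed.

Lemma in_disc_ray (z : C) (s : R) : in_disc z -> 0 <= s <= 1 -> in_disc (RtoC s * z)%C.
Proof.
  unfold in_disc. intros Hz Hs. rewrite Cmod_mult, Cmod_R, Rabs_pos_eq by lra.
  pose proof (Cmod_ge_0 z). nra.
Qed.

Lemma in_disc_0 : in_disc 0%C.
Proof. unfold in_disc. rewrite Cmod_0. lra. Qed.

Definition seg_integrand (q : C -> C) (a b : C) (t : R) : C :=
  (q (a + RtoC t * (b - a)) * (b - a))%C.

Definition seg_int (q : C -> C) (a b : C) : C :=
  RInt (V := C_R_CompleteNormedModule) (seg_integrand q a b) 0 1.

Definition cont_on_seg (q : C -> C) (a b : C) : Prop :=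
  forall t, 0 <= t <= 1 -> Ccont q (a + RtoC t * (b - a))%C.

Notation is_RInt_C := (@is_RInt C_R_NormedModule).

Lemma norm_C_R (z : C) : @norm R_AbsRing C_R_NormedModule z = Cmod z.
Proof.
  unfold norm. simpl. unfold prod_norm, Cmod. simpl.
  change (norm (fst z)) with (Rabs (fst z)). change (norm (snd z)) with (Rabs (snd z)).
  f_equal. rewrite !Rmult_1_r, <- !Rabs_mult, !Rabs_pos_eq by nra. reflexivity.
Qed.

Lemma seg_integrand_continuous q a b t : Ccont q (a + RtoC t * (b - a))%C ->
  @continuous R_UniformSpace C_R_CompleteNormedModule (seg_integrand q a b) t.
Proof.
  intros H. apply filterlim_locally. intros eps.
  set (K := Cmod (b - a) + 1). pose proof (Cmod_ge_0 (b - a)).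
  assert (HK : 0 < K) by (unfold K; lra).
  destruct (H (eps / K)) as [d [Hd H1]]; [apply Rdiv_lt_0_compat; [apply cond_pos | auto]|].
  exists (mkposreal (d / K) (Rdiv_lt_0_compat _ _ Hd HK)). intros s Hs.
  change (Rabs (s - t) < d / K) in Hs.
  apply C_NormedModule_mixin_compat1. unfold seg_integrand.
  change (Cmod (q (a + RtoC s * (b - a)) * (b - a) - q (a + RtoC t * (b - a)) * (b - a))%C < eps).
  replace (q (a + RtoC s * (b - a)) * (b - a) - q (a + RtoC t * (b - a)) * (b - a))%C
    with ((q (a + RtoC s * (b - a)) - q (a + RtoC t * (b - a))) * (b - a))%C by ring.
  rewrite Cmod_mult.
  assert (Hst : Cmod (a + RtoC s * (b - a) - (a + RtoC t * (b - a)))%C < d).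
  { replace (a + RtoC s * (b - a) - (a + RtoC t * (b - a)))%C with (RtoC (s - t) * (b - a))%C
      by (rewrite RtoC_minus; ring).
    rewrite Cmod_mult, Cmod_R.
    apply Rmult_lt_compat_r with (r := K) in Hs; [|auto].
    replace (d / K * K) with d in Hs by (field; lra). unfold K in Hs.
    pose proof (Rabs_pos (s - t)). nra. }
  specialize (H1 _ Hst).
  apply Rle_lt_trans with (eps / K * Cmod (b - a)); [apply Rmult_le_compat_r; lra|].
  apply Rlt_le_trans with (eps / K * K); [|right; field; lra].
  apply Rmult_lt_compat_l; [apply Rdiv_lt_0_compat; [apply cond_pos | auto] | unfold K; lra].
Qed.

Lemma is_RInt_seg_int q a b :
  cont_on_seg q a b -> is_RInt_C (seg_integrand q a b) 0 1 (seg_int q a b).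
Proof.
  intros H. apply (@RInt_correct C_R_CompleteNormedModule).
  apply (@ex_RInt_continuous C_R_CompleteNormedModule). intros t Ht.
  apply seg_integrand_continuous, H. rewrite Rmin_left, Rmax_right in Ht; lra.
Qed.

Lemma seg_int_eq q a b I : is_RInt_C (seg_integrand q a b) 0 1 I -> seg_int q a b = I.
Proof. apply (@is_RInt_unique C_R_CompleteNormedModule). Qed.

Lemma is_RInt_subseg q a b c d I : is_RInt_C (seg_integrand q a b) c d I ->
  is_RInt_C (seg_integrand q (a + RtoC c * (b - a)) (a + RtoC d * (b - a)))%C 0 1 I.
Proof.
  intros H.
  assert (H' : is_RInt_C (seg_integrand q a b) ((d - c) * 0 + c) ((d - c) * 1 + c) I).
  { replace ((d - c) * 0 + c) with c by ring. replace ((d - c) * 1 + c) with d by ring. exact H. }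
  apply (@is_RInt_comp_lin C_R_NormedModule) in H'.
  eapply (@is_RInt_ext C_R_NormedModule); [|exact H'].
  intros y _. unfold seg_integrand.
  replace (a + RtoC ((d - c) * y + c) * (b - a))%C with
    (a + RtoC c * (b - a) + RtoC y * (a + RtoC d * (b - a) - (a + RtoC c * (b - a))))%C by C_field.
  set (Q := q _). C_field.
Qed.

Lemma seg_int_split q a b s : 0 < s < 1 -> cont_on_seg q a b ->
  seg_int q a b = (seg_int q a (a + RtoC s * (b - a)) + seg_int q (a + RtoC s * (b - a)) b)%C.
Proof.
  intros Hs H. pose proof (is_RInt_seg_int q a b H) as HI.
  destruct (@ex_RInt_Chasles_1 C_R_CompleteNormedModule _ 0 s 1 ltac:(lra) (ex_intro _ _ HI))
    as [l1 H1].
  destruct (@ex_RInt_Chasles_2 C_R_CompleteNormedModule _ 0 s 1 ltac:(lra) (ex_intro _ _ HI))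
    as [l2 H2].
  pose proof (@is_RInt_Chasles C_R_NormedModule _ _ _ _ _ _ H1 H2) as Hsum.
  rewrite (seg_int_eq _ _ _ _ Hsum).
  apply is_RInt_subseg in H1. apply is_RInt_subseg in H2.
  replace (a + RtoC 0 * (b - a))%C with a in H1 by C_field.
  replace (a + RtoC 1 * (b - a))%C with b in H2 by C_field.
  rewrite (seg_int_eq _ _ _ _ H1), (seg_int_eq _ _ _ _ H2). reflexivity.
Qed.

Lemma seg_int_rev q a b : cont_on_seg q a b -> seg_int q b a = (- seg_int q a b)%C.
Proof.
  intros H. pose proof (is_RInt_seg_int q a b H) as HI.
  apply (@is_RInt_swap C_R_NormedModule) in HI. apply is_RInt_subseg in HI.
  replace (a + RtoC 1 * (b - a))%C with b in HI by C_field.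
  replace (a + RtoC 0 * (b - a))%C with a in HI by C_field.
  rewrite (seg_int_eq _ _ _ _ HI). reflexivity.
Qed.

Lemma seg_int_bound q a b M : cont_on_seg q a b ->
  (forall t, 0 <= t <= 1 -> Cmod (q (a + RtoC t * (b - a))%C) <= M) ->
  Cmod (seg_int q a b) <= M * Cmod (b - a).
Proof.
  intros H HM. pose proof (is_RInt_seg_int q a b H) as HI.
  rewrite <- norm_C_R. replace (M * Cmod (b - a)) with ((1 - 0) * (M * Cmod (b - a))) by ring.
  apply (@norm_RInt_le_const C_R_NormedModule) with (f := seg_integrand q a b); [lra| |exact HI].
  intros t Ht. rewrite norm_C_R. unfold seg_integrand. rewrite Cmod_mult.
  apply Rmult_le_compat_r; [apply Cmod_ge_0 | auto].
Qed.

Lemma seg_int_minus q1 q2 a b : cont_on_seg q1 a b -> cont_on_seg q2 a b ->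
  seg_int (fun w => q1 w - q2 w)%C a b = (seg_int q1 a b - seg_int q2 a b)%C.
Proof.
  intros H1 H2.
  pose proof (@is_RInt_minus C_R_NormedModule _ _ _ _ _ _
    (is_RInt_seg_int q1 a b H1) (is_RInt_seg_int q2 a b H2)) as I.
  apply seg_int_eq. eapply (@is_RInt_ext C_R_NormedModule); [|exact I].
  intros x _. unfold seg_integrand. set (Q1 := q1 _). set (Q2 := q2 _). C_field.
Qed.

Lemma seg_int_nil q a : seg_int q a a = 0%C.
Proof.
  apply seg_int_eq.
  replace (RtoC 0) with (@scal R_AbsRing C_R_NormedModule (1 - 0) (RtoC 0)) by C_field.
  eapply (@is_RInt_ext C_R_NormedModule); [|apply is_RInt_const].
  intros x _. unfold seg_integrand. C_field.
Qed.

Lemma is_RInt_affine (al be : R) : is_RInt (fun t => al + t * be) 0 1 (al + be / 2).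
Proof.
  replace (al + be / 2) with ((al * 1 + be * 1 ^ 2 / 2) - (al * 0 + be * 0 ^ 2 / 2)) by field.
  apply (is_RInt_derive (fun t => al * t + be * t ^ 2 / 2)).
  - intros x _. auto_derive; [auto | field].
  - intros x _. apply (continuous_plus (fun _ => al) (fun t => t * be)); [apply continuous_const|].
    apply (continuous_mult (fun t => t) (fun _ => be)); [apply continuous_id | apply continuous_const].
Qed.

Lemma seg_int_affine (A B a b : C) :
  seg_int (fun w => A + B * w)%C a b = (A * (b - a) + B * (b * b - a * a) / 2)%C.
Proof.
  set (c1 := ((A + B * a) * (b - a))%C). set (c2 := (B * (b - a) * (b - a))%C).
  pose proof (@is_RInt_fct_extend_pair R_NormedModule R_NormedModule
     (fun t => (fst c1 + t * fst c2, snd c1 + t * snd c2)) 0 1 _ _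
     (is_RInt_affine (fst c1) (fst c2)) (is_RInt_affine (snd c1) (snd c2))) as I.
  change (is_RInt_C (fun t => (fst c1 + t * fst c2, snd c1 + t * snd c2)) 0 1
    (fst c1 + fst c2 / 2, snd c1 + snd c2 / 2)) in I.
  rewrite (seg_int_eq (fun w => A + B * w)%C a b (fst c1 + fst c2 / 2, snd c1 + snd c2 / 2)).
  - unfold c1, c2. C_field.
  - eapply (@is_RInt_ext C_R_NormedModule); [|exact I].
    intros x _. unfold seg_integrand, c1, c2. C_field.
Qed.

(** * Goursat's lemma *)

Lemma Cmod_le_eps_eq_0 (D : C) (K e0 : R) :
  0 < e0 -> (forall e, 0 < e < e0 -> Cmod D <= K * e) -> D = 0%C.
Proof.
  intros He0 H. apply Cmod_eq_0. apply Rle_antisym; [|apply Cmod_ge_0].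
  destruct (Rle_dec (Cmod D) 0) as [Hd|Hd]; [exact Hd|]. exfalso.
  set (K' := Rabs K + 1). assert (HK' : 0 < K') by (unfold K'; pose proof (Rabs_pos K); lra).
  set (e := Rmin (e0 / 2) (Cmod D / (2 * K'))).
  assert (He : 0 < e) by (apply Rmin_pos; [lra | apply Rdiv_lt_0_compat; lra]).
  assert (He1 : e < e0) by (unfold e; eapply Rle_lt_trans; [apply Rmin_l | lra]).
  assert (He2 : K' * e <= Cmod D / 2).
  { apply Rle_trans with (K' * (Cmod D / (2 * K'))); [apply Rmult_le_compat_l; [lra | apply Rmin_r]|].
    right. field. lra. }
  specialize (H e (conj He He1)).
  assert (K * e <= K' * e) by (apply Rmult_le_compat_r; [lra | unfold K'; pose proof (Rle_abs K); lra]).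
  lra.
Qed.

Lemma pow2_unbounded (M : R) : exists N : nat, M < 2 ^ N.
Proof.
  destruct (INR_archimed 1 M ltac:(lra)) as [n Hn]. exists n.
  assert (H : forall k, INR k <= 2 ^ k).
  { induction k; [simpl; lra|]. rewrite S_INR. simpl.
    assert (1 <= 2 ^ k) by (apply pow_R1_Rle; lra). lra. }
  specialize (H n). lra.
Qed.

Lemma pow2_small (K eps : R) : 0 <= K -> 0 < eps -> exists N : nat, K / 2 ^ N < eps.
Proof.
  intros HK He. destruct (pow2_unbounded (K / eps)) as [N HN]. exists N.
  assert (H2 : 0 < 2 ^ N) by (apply pow_lt; lra).
  apply Rmult_lt_reg_r with (2 ^ N); [exact H2|].
  replace (K / 2 ^ N * 2 ^ N) with K by (field; lra).
  apply Rmult_lt_compat_l with (r := eps) in HN; [|exact He].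
  replace (eps * (K / eps)) with K in HN by (field; lra). lra.
Qed.

Lemma R_geom_cauchy_limit (U : nat -> R) (K : R) : 0 <= K ->
  (forall n k, Rabs (U (k + n)%nat - U n) <= K / 2 ^ n) ->
  exists x, forall n, Rabs (U n - x) <= K / 2 ^ n.
Proof.
  intros HK H.
  assert (Hc : Cauchy_crit U).
  { intros eps He. destruct (pow2_small K eps HK He) as [N HN]. exists N. intros n m Hn Hm.
    assert (HB : forall j, (j >= N)%nat -> K / 2 ^ j < eps).
    { intros j Hj. eapply Rle_lt_trans; [|exact HN]. unfold Rdiv.
      apply Rmult_le_compat_l; [exact HK|]. apply Rinv_le_contravar; [apply pow_lt; lra|].
      apply Rle_pow; [lra | lia]. }
    unfold Rdist. destruct (le_lt_dec n m) as [Hnm|Hnm].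
    - replace m with ((m - n) + n)%nat by lia. rewrite Rabs_minus_sym.
      eapply Rle_lt_trans; [apply H | apply HB; auto].
    - replace n with ((n - m) + m)%nat by lia. eapply Rle_lt_trans; [apply H | apply HB; auto]. }
  destruct (Rcomplete.R_complete U Hc) as [x Hx]. exists x. intros n.
  apply Rle_plus_epsilon. intros eps He. destruct (Hx eps He) as [N HN].
  specialize (HN (N + n)%nat ltac:(lia)). unfold Rdist in HN. specialize (H n N).
  replace (U n - x) with ((U (N + n)%nat - x) - (U (N + n)%nat - U n)) by ring.
  eapply Rle_trans; [apply Rabs_triang|]. rewrite Rabs_Ropp. lra.
Qed.

Lemma C_geom_cauchy_limit (U : nat -> C) (K : R) : 0 <= K ->
  (forall n k, Cmod (U (k + n)%nat - U n) <= K / 2 ^ n) ->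
  exists p, forall n, Cmod (U n - p) <= 2 * K / 2 ^ n.
Proof.
  intros HK H.
  destruct (R_geom_cauchy_limit (fun n => fst (U n)) K HK) as [x Hx].
  { intros n k. eapply Rle_trans; [|apply (H n k)]. apply (re_le_Cmod (U (k + n)%nat - U n)). }
  destruct (R_geom_cauchy_limit (fun n => snd (U n)) K HK) as [y Hy].
  { intros n k. eapply Rle_trans; [|apply (H n k)]. apply (Rabs_snd_le (U (k + n)%nat - U n)). }
  exists (x, y). intros n. eapply Rle_trans; [apply Cmod_le_sum|].
  specialize (Hx n). specialize (Hy n). simpl in Hx, Hy |- *.
  replace (2 * K / 2 ^ n) with (K / 2 ^ n + K / 2 ^ n) by (field; apply pow_nonzero; lra).
  unfold Rminus in *. lra.
Qed.

Definition tri_int (q : C -> C) (a b c : C) : C := (seg_int q a b + seg_int q b c + seg_int q c a)%C.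

Definition perim (a b c : C) : R := Cmod (b - a) + Cmod (c - b) + Cmod (a - c).

Definition mid (x y : C) : C := (x + RtoC (1 / 2) * (y - x))%C.

Lemma perim_nonneg a b c : 0 <= perim a b c.
Proof.
  unfold perim. pose proof (Cmod_ge_0 (b - a)). pose proof (Cmod_ge_0 (c - b)).
  pose proof (Cmod_ge_0 (a - c)). lra.
Qed.

Lemma tri_int_affine (A B a b c : C) : tri_int (fun w => A + B * w)%C a b c = 0%C.
Proof. unfold tri_int. rewrite !seg_int_affine. field. Qed.

Lemma Cmod_mid_sub_l (x y : C) : Cmod (mid x y - x) = Cmod (y - x) / 2.
Proof.
  unfold mid. replace (x + RtoC (1 / 2) * (y - x) - x)%C with (RtoC (1 / 2) * (y - x))%C by ring.
  rewrite Cmod_mult, Cmod_R, Rabs_pos_eq by lra. field.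
Qed.

Lemma Cmod_mid_sub_r (x y : C) : Cmod (mid x y - y) = Cmod (y - x) / 2.
Proof.
  unfold mid. replace (x + RtoC (1 / 2) * (y - x) - y)%C with (RtoC (1 / 2) * (x - y))%C by C_field.
  rewrite Cmod_mult, Cmod_R, Rabs_pos_eq, Cmod_sub_sym by lra. field.
Qed.

Lemma Cmod_edge_le_perim a b c x y s : 0 <= s <= 1 ->
  (x = a /\ y = b) \/ (x = b /\ y = c) \/ (x = c /\ y = a) ->
  Cmod (x + RtoC s * (y - x) - a)%C <= perim a b c.
Proof.
  intros Hs Hxy. eapply Rle_trans; [apply Cmod_convex; exact Hs|].
  unfold perim. rewrite (Cmod_sub_sym a c).
  pose proof (Cmod_ge_0 (b - a)). pose proof (Cmod_ge_0 (c - b)). pose proof (Cmod_ge_0 (c - a)).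
  assert (Haa : Cmod (a - a) = 0) by (replace (a - a)%C with (RtoC 0) by ring; apply Cmod_0).
  destruct Hxy as [[-> ->]|[[-> ->]|[-> ->]]]; rewrite ?Haa; nra.
Qed.

Section Goursat.

Variable q : C -> C.
Variable P : C -> Prop.
Hypothesis P_convex :
  forall x y t, P x -> P y -> 0 <= t <= 1 -> P (x + RtoC t * (y - x))%C.
Hypothesis P_closed :
  forall x, (forall eps, 0 < eps -> exists y, P y /\ Cmod (y - x) < eps) -> P x.
Hypothesis q_diff : forall x, P x -> exists l, Cdiff q x l.

Lemma cont_on_seg_P x y : P x -> P y -> cont_on_seg q x y.
Proof.
  intros Hx Hy t Ht. destruct (q_diff _ (P_convex x y t Hx Hy Ht)) as [l Hl].
  exact (Cdiff_cont _ _ _ Hl).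
Qed.

Lemma P_mid x y : P x -> P y -> P (mid x y).
Proof. intros Hx Hy. apply P_convex; auto. lra. Qed.

Lemma tri_int_subdiv a b c : P a -> P b -> P c ->
  tri_int q a b c =
  (tri_int q a (mid a b) (mid c a) + tri_int q (mid a b) b (mid b c)
   + tri_int q (mid c a) (mid b c) c + tri_int q (mid a b) (mid b c) (mid c a))%C.
Proof.
  intros Ha Hb Hc. unfold tri_int.
  rewrite (seg_int_split q a b (1 / 2)), (seg_int_split q b c (1 / 2)),
    (seg_int_split q c a (1 / 2)) by (lra || apply cont_on_seg_P; auto).
  fold (mid a b) (mid b c) (mid c a).
  rewrite (seg_int_rev q (mid a b) (mid c a)), (seg_int_rev q (mid a b) (mid b c)),
    (seg_int_rev q (mid b c) (mid c a)) by (apply cont_on_seg_P; apply P_mid; auto).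
  ring.
Qed.

(* Affine approximation of [q] at [p] within [R] of [p] controls [tri_int q],
   since affine functions integrate to [0] around triangles. *)
Lemma tri_int_local_bound a b c p l eps :
  0 <= eps -> P a -> P b -> P c ->
  (forall w, Cmod (w - p) <= perim a b c + Cmod (a - p) ->
     Cmod (q w - q p - l * (w - p)) <= eps * Cmod (w - p)) ->
  Cmod (tri_int q a b c) <= eps * (perim a b c + Cmod (a - p)) * perim a b c.
Proof.
  intros He Ha Hb Hc Happrox. set (R := perim a b c + Cmod (a - p)).
  set (L := fun w : C => ((q p - l * p) + l * w)%C).
  assert (HL : forall x y, cont_on_seg L x y).
  { intros x y t _. apply (Cdiff_cont _ _ l). apply Cdiff_exact. intros w. unfold L. ring. }
  assert (Hedge : forall x y, P x -> P y ->
            (x = a /\ y = b) \/ (x = b /\ y = c) \/ (x = c /\ y = a) ->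
            Cmod (seg_int (fun w => q w - L w)%C x y) <= eps * R * Cmod (y - x)).
  { intros x y Hx Hy Hxy. apply seg_int_bound.
    - intros s Hs. apply Ccont_minus; [apply (cont_on_seg_P x y Hx Hy s Hs) | apply HL; exact Hs].
    - intros s Hs. pose proof (Cmod_edge_le_perim a b c x y s Hs Hxy) as Hwa.
      set (w := (x + RtoC s * (y - x))%C) in *.
      assert (Hw : Cmod (w - p) <= R).
      { replace (w - p)%C with ((w - a) + (a - p))%C by ring.
        eapply Rle_trans; [apply Cmod_triangle|]. unfold R. lra. }
      replace (q w - L w)%C with (q w - q p - l * (w - p))%C by (unfold L; ring).
      eapply Rle_trans; [exact (Happrox w Hw)|]. apply Rmult_le_compat_l; [exact He | exact Hw]. }
  assert (Hsplit : tri_int q a b c = tri_int (fun w => q w - L w)%C a b c).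
  { unfold tri_int. rewrite !seg_int_minus by (apply cont_on_seg_P || apply HL; auto).
    pose proof (tri_int_affine (q p - l * p) l a b c) as H0. unfold tri_int in H0. fold L in H0.
    transitivity (seg_int q a b + seg_int q b c + seg_int q c a - 0)%C; [ring|].
    rewrite <- H0. ring. }
  rewrite Hsplit. unfold tri_int, perim.
  eapply Rle_trans; [apply Cmod_triangle|].
  eapply Rle_trans; [apply Rplus_le_compat_r, Cmod_triangle|].
  pose proof (Hedge a b Ha Hb ltac:(tauto)). pose proof (Hedge b c Hb Hc ltac:(tauto)).
  pose proof (Hedge c a Hc Ha ltac:(tauto)). lra.
Qed.

Definition triangle := (C * C * C)%type.

Definition tri_val (t : triangle) : C := let '(a, b, c) := t in tri_int q a b c.
Definition tri_perim (t : triangle) : R := let '(a, b, c) := t in perim a b c.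
Definition tri_vertex (t : triangle) : C := let '(a, _, _) := t in a.
Definition tri_in_P (t : triangle) : Prop := let '(a, b, c) := t in P a /\ P b /\ P c.

Definition quarter (k : nat) (t : triangle) : triangle :=
  let '(a, b, c) := t in
  match k with
  | O => (a, mid a b, mid c a)
  | 1%nat => (mid a b, b, mid b c)
  | 2%nat => (mid c a, mid b c, c)
  | _ => (mid a b, mid b c, mid c a)
  end.

Definition heavy_quarter (t : triangle) : triangle :=
  if Rle_dec (Cmod (tri_val t) / 4) (Cmod (tri_val (quarter 0 t))) then quarter 0 t else
  if Rle_dec (Cmod (tri_val t) / 4) (Cmod (tri_val (quarter 1 t))) then quarter 1 t else
  if Rle_dec (Cmod (tri_val t) / 4) (Cmod (tri_val (quarter 2 t))) then quarter 2 t else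
  quarter 3 t.

Lemma heavy_quarter_is_quarter t : exists k, heavy_quarter t = quarter k t.
Proof.
  unfold heavy_quarter.
  destruct Rle_dec; [now exists 0%nat|]. destruct Rle_dec; [now exists 1%nat|].
  destruct Rle_dec; [now exists 2%nat | now exists 3%nat].
Qed.

Lemma tri_in_P_quarter k t : tri_in_P t -> tri_in_P (quarter k t).
Proof.
  destruct t as [[a b] c]. intros [Ha [Hb Hc]].
  destruct k as [|[|[|k]]]; simpl; repeat split; auto; apply P_mid; auto.
Qed.

Lemma tri_perim_quarter k t : tri_perim (quarter k t) = tri_perim t / 2.
Proof.
  destruct t as [[a b] c].
  assert (Hhalf : forall x y : C, x = (RtoC (1 / 2) * y)%C -> Cmod x = Cmod y / 2)
    by (intros x y ->; rewrite Cmod_mult, Cmod_R, Rabs_pos_eq by lra; field).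
  destruct k as [|[|[|k]]]; cbn [quarter tri_perim]; unfold perim, mid;
  repeat match goal with |- context [Cmod ?x] =>
    match x with
    | (_ - _)%C =>
        first [ rewrite (Hhalf x (b - a)%C) by C_field | rewrite (Hhalf x (c - b)%C) by C_field
              | rewrite (Hhalf x (a - c)%C) by C_field | rewrite (Hhalf x (a - b)%C) by C_field
              | rewrite (Hhalf x (b - c)%C) by C_field | rewrite (Hhalf x (c - a)%C) by C_field ]
    end end;
  rewrite ?(Cmod_sub_sym a b), ?(Cmod_sub_sym b c), ?(Cmod_sub_sym c a); field.
Qed.

Lemma Cmod_heavy_quarter t :
  tri_in_P t -> Cmod (tri_val t) / 4 <= Cmod (tri_val (heavy_quarter t)).
Proof.
  destruct t as [[a b] c]. intros [Ha [Hb Hc]].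
  pose proof (tri_int_subdiv a b c Ha Hb Hc) as E.
  unfold heavy_quarter. destruct Rle_dec; [assumption|].
  destruct Rle_dec; [assumption|]. destruct Rle_dec; [assumption|].
  simpl in *. rewrite E in *.
  set (T0 := tri_int q a (mid a b) (mid c a)) in *.
  set (T1 := tri_int q (mid a b) b (mid b c)) in *.
  set (T2 := tri_int q (mid c a) (mid b c) c) in *.
  set (T3 := tri_int q (mid a b) (mid b c) (mid c a)) in *.
  pose proof (Cmod_triangle (T0 + T1 + T2) T3). pose proof (Cmod_triangle (T0 + T1) T2).
  pose proof (Cmod_triangle T0 T1). lra.
Qed.

Lemma tri_vertex_quarter k t : Cmod (tri_vertex (quarter k t) - tri_vertex t) <= tri_perim t.
Proof.
  destruct t as [[a b] c]. cbn [tri_vertex tri_perim]. unfold perim.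
  pose proof (Cmod_ge_0 (b - a)). pose proof (Cmod_ge_0 (c - b)). pose proof (Cmod_ge_0 (a - c)).
  destruct k as [|[|[|k]]]; cbn [quarter tri_vertex].
  - replace (a - a)%C with (RtoC 0) by ring. rewrite Cmod_0. lra.
  - rewrite Cmod_mid_sub_l. lra.
  - rewrite Cmod_mid_sub_r. lra.
  - rewrite Cmod_mid_sub_l. lra.
Qed.
Section Nest.

Variable t0 : triangle.
Hypothesis t0_in_P : tri_in_P t0.

Fixpoint nest (n : nat) : triangle :=
  match n with O => t0 | S n => heavy_quarter (nest n) end.

Lemma nest_in_P n : tri_in_P (nest n).
Proof.
  induction n as [|n IH]; [exact t0_in_P|]. simpl.
  destruct (heavy_quarter_is_quarter (nest n)) as [k ->]. apply tri_in_P_quarter, IH.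
Qed.

Lemma tri_perim_nest n : tri_perim (nest n) = tri_perim t0 / 2 ^ n.
Proof.
  induction n as [|n IH]; simpl; [field|].
  destruct (heavy_quarter_is_quarter (nest n)) as [k ->].
  rewrite tri_perim_quarter, IH. field. apply pow_nonzero. lra.
Qed.

Lemma Cmod_tri_val_nest n : Cmod (tri_val t0) <= 4 ^ n * Cmod (tri_val (nest n)).
Proof.
  induction n as [|n IH]; simpl; [lra|].
  pose proof (Cmod_heavy_quarter (nest n) (nest_in_P n)). pose proof (pow_lt 4 n ltac:(lra)). nra.
Qed.

Lemma nest_vertex_cauchy n k :
  Cmod (tri_vertex (nest (k + n)) - tri_vertex (nest n))
  <= 2 * tri_perim t0 / 2 ^ n - 2 * tri_perim t0 / 2 ^ (k + n).
Proof.
  induction k as [|k IH]; simpl.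
  - replace (tri_vertex (nest n) - tri_vertex (nest n))%C with (RtoC 0) by ring.
    rewrite Cmod_0. lra.
  - destruct (heavy_quarter_is_quarter (nest (k + n))) as [j ->].
    replace (tri_vertex (quarter j (nest (k + n))) - tri_vertex (nest n))%C with
      ((tri_vertex (quarter j (nest (k + n))) - tri_vertex (nest (k + n)))
       + (tri_vertex (nest (k + n)) - tri_vertex (nest n)))%C by ring.
    eapply Rle_trans; [apply Cmod_triangle|].
    pose proof (tri_vertex_quarter j (nest (k + n))) as H. rewrite tri_perim_nest in H.
    assert (0 < 2 ^ (k + n)) by (apply pow_lt; lra).
    assert (E : tri_perim t0 / 2 ^ (k + n) - 2 * tri_perim t0 / (2 * 2 ^ (k + n)) = 0)
      by (field; lra).
    lra.
Qed.

Lemma nest_vertex_limit :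
  exists p, P p /\ forall n, Cmod (tri_vertex (nest n) - p) <= 4 * tri_perim t0 / 2 ^ n.
Proof.
  assert (Hper : 0 <= tri_perim t0) by (destruct t0 as [[a b] c]; apply perim_nonneg).
  destruct (C_geom_cauchy_limit (fun n => tri_vertex (nest n)) (2 * tri_perim t0)) as [p Hp];
    [lra| |].
  { intros n k. eapply Rle_trans; [apply nest_vertex_cauchy|].
    assert (0 <= 2 * tri_perim t0 / 2 ^ (k + n))
      by (apply Rdiv_le_0_compat; [lra | apply pow_lt; lra]).
    unfold Rdiv in *. lra. }
  exists p. split.
  - apply P_closed. intros eps He.
    destruct (pow2_small (4 * tri_perim t0) eps ltac:(lra) He) as [n Hn].
    exists (tri_vertex (nest n)). split.
    + pose proof (nest_in_P n) as H. destruct (nest n) as [[a b] c]. apply H.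
    + eapply Rle_lt_trans; [|exact Hn]. specialize (Hp n). cbv beta in Hp.
      replace (4 * tri_perim t0) with (2 * (2 * tri_perim t0)) by ring. exact Hp.
  - intros n. specialize (Hp n). cbv beta in Hp.
    replace (4 * tri_perim t0) with (2 * (2 * tri_perim t0)) by ring. exact Hp.
Qed.

(* The [n]-th triangle has perimeter [per / 2^n] and lies within [5 per / 2^n] of
   the limit point [p], where [q] is [eps]-close to affine; its integral is thus
   [O(eps / 4^n)], while it is at least [4^-n] times the original one. *)
Lemma tri_val_nest_eq_0 : tri_val t0 = 0%C.
Proof.
  set (per := tri_perim t0).
  assert (Hper : 0 <= per) by (destruct t0 as [[a b] c]; apply perim_nonneg).
  destruct nest_vertex_limit as [p [Hp Hlim]]. fold per in Hlim.
  destruct (q_diff p Hp) as [l Hl].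
  apply (Cmod_le_eps_eq_0 _ (5 * per ^ 2) 1); [lra|]. intros eps [He _].
  destruct (Hl eps He) as [d [Hd Hdl]].
  destruct (pow2_small (5 * per) d ltac:(lra) Hd) as [n Hn].
  assert (H2n : 0 < 2 ^ n) by (apply pow_lt; lra).
  pose proof (Cmod_tri_val_nest n) as Hval. pose proof (tri_perim_nest n) as Hperim.
  pose proof (nest_in_P n) as HnP. pose proof (Hlim n) as Hvertex. fold per in Hperim.
  destruct (nest n) as [[a b] c]. cbn in Hval, Hperim, HnP, Hvertex. destruct HnP as [Ha [Hb Hc]].
  assert (HR : perim a b c + Cmod (a - p) <= 5 * per / 2 ^ n).
  { rewrite Hperim. replace (5 * per / 2 ^ n) with (per / 2 ^ n + 4 * per / 2 ^ n) by (field; lra).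
    lra. }
  pose proof (tri_int_local_bound a b c p l eps ltac:(lra) Ha Hb Hc) as Hloc.
  eapply Rle_trans; [exact Hval|].
  eapply Rle_trans.
  { apply Rmult_le_compat_l; [apply pow_le; lra|]. apply Hloc.
    intros w Hw. apply Hdl. lra. }
  rewrite Hperim.
  assert (E4 : 4 ^ n = 2 ^ n * 2 ^ n) by (rewrite <- Rpow_mult_distr; f_equal; ring).
  apply Rle_trans with (2 ^ n * 2 ^ n * (eps * (5 * per / 2 ^ n) * (per / 2 ^ n))).
  - rewrite E4. apply Rmult_le_compat_l; [nra|].
    apply Rmult_le_compat_r; [apply Rdiv_le_0_compat; lra|]. apply Rmult_le_compat_l; lra.
  - right. field. lra.
Qed.

End Nest.

Theorem goursat a b c : P a -> P b -> P c -> tri_int q a b c = 0%C.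
Proof. intros Ha Hb Hc. exact (tri_val_nest_eq_0 (a, b, c) (conj Ha (conj Hb Hc))). Qed.

End Goursat.

(** * Primitives on the disc of functions holomorphic off [0] *)

Definition Cdot (v u : C) : R := fst v * fst u + snd v * snd u.

Lemma Cdot_bound v u : Rabs (Cdot v u) <= Cmod v * Cmod u.
Proof.
  replace (Cdot v u) with (fst (v * Cconj u)%C) by (unfold Cdot, Cconj; simpl; ring).
  rewrite <- (Cmod_conj u), <- Cmod_mult. apply re_le_Cmod.
Qed.

Lemma Cdot_convex x y u s : Cdot (x + RtoC s * (y - x))%C u = (1 - s) * Cdot x u + s * Cdot y u.
Proof. unfold Cdot. simpl. ring. Qed.

Lemma Cdot_self u : Cdot u u = Cmod u ^ 2.
Proof. rewrite Cmod2_alt. unfold Cdot, Re, Im. ring. Qed.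

Lemma Cdot_minus x y u : Cdot (x - y)%C u = Cdot x u - Cdot y u.
Proof. unfold Cdot. simpl. ring. Qed.

Lemma Cdot_scal (e : R) x u : Cdot (RtoC e * x)%C u = e * Cdot x u.
Proof. unfold Cdot. simpl. ring. Qed.

Definition disc_halfplane (r : R) (u : C) (c : R) (w : C) : Prop := Cmod w <= r /\ c <= Cdot w u.

Lemma disc_halfplane_convex r u c x y s :
  disc_halfplane r u c x -> disc_halfplane r u c y -> 0 <= s <= 1 ->
  disc_halfplane r u c (x + RtoC s * (y - x))%C.
Proof.
  intros [Hx1 Hx2] [Hy1 Hy2] Hs. split.
  - eapply Rle_trans; [apply Cmod_convex0; exact Hs|]. nra.
  - rewrite Cdot_convex. nra.
Qed.

Lemma disc_halfplane_closed r u c x :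
  (forall eps, 0 < eps -> exists y, disc_halfplane r u c y /\ Cmod (y - x) < eps) ->
  disc_halfplane r u c x.
Proof.
  intros Hx. pose proof (Cmod_ge_0 u). split.
  - apply Rle_plus_epsilon. intros eps Heps. destruct (Hx eps Heps) as [y [[Hy1 _] Hy2]].
    pose proof (Cmod_sub_ge y x). pose proof (Cmod_sub_ge x y). rewrite (Cmod_sub_sym x y) in *.
    lra.
  - apply Rle_plus_epsilon. intros eps Heps.
    destruct (Hx (eps / (Cmod u + 1))) as [y [[_ Hy1] Hy2]]; [apply Rdiv_lt_0_compat; lra|].
    replace (Cdot x u) with (Cdot y u - Cdot (y - x) u) by (rewrite Cdot_minus; ring).
    pose proof (Cdot_bound (y - x) u) as Hb. apply Rabs_le_between in Hb.
    assert (Cmod (y - x) * Cmod u <= eps).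
    { apply Rle_trans with (eps / (Cmod u + 1) * (Cmod u + 1)); [|right; field; lra].
      pose proof (Cmod_ge_0 (y - x)). nra. }
    lra.
Qed.

Section Primitive.

Variable q : C -> C.
Hypothesis q_cont : forall w, in_disc w -> Ccont q w.
Hypothesis q_diff : forall w, in_disc w -> w <> 0%C -> exists l, Cdiff q w l.

Lemma cont_on_seg_disc x y : in_disc x -> in_disc y -> cont_on_seg q x y.
Proof. intros Hx Hy t Ht. apply q_cont, in_disc_convex; auto. Qed.

Lemma Cmod_tri_int_near0 a b r M e : in_disc a -> in_disc b ->
  Cmod a <= e -> Cmod b <= e -> e < r -> (forall w, Cmod w < r -> Cmod (q w) <= M) ->
  Cmod (tri_int q 0 a b) <= 4 * M * e.
Proof.
  intros Da Db Ha Hb Her HM.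
  assert (HM0 : 0 <= M)
    by (eapply Rle_trans; [apply Cmod_ge_0 | apply HM; rewrite Cmod_0; pose proof (Cmod_ge_0 a); lra]).
  assert (Hseg : forall x y, in_disc x -> in_disc y -> Cmod x <= e -> Cmod y <= e ->
            Cmod (seg_int q x y) <= M * Cmod (y - x)).
  { intros x y Dx Dy Hx Hy. apply seg_int_bound; [apply cont_on_seg_disc; auto|].
    intros t Ht. apply HM, Cmod_convex_lt; auto; lra. }
  assert (He0 : Cmod 0 <= e) by (rewrite Cmod_0; pose proof (Cmod_ge_0 a); lra).
  assert (Hba : Cmod (b - a) <= 2 * e).
  { unfold Cminus. eapply Rle_trans; [apply Cmod_triangle|]. rewrite Cmod_opp. lra. }
  pose proof (Hseg 0%C a in_disc_0 Da He0 Ha). pose proof (Hseg a b Da Db Ha Hb).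
  pose proof (Hseg b 0%C Db in_disc_0 Hb He0).
  replace (a - 0)%C with a in * by ring. replace (0 - b)%C with (- b)%C in * by ring.
  rewrite Cmod_opp in *. unfold tri_int.
  eapply Rle_trans; [apply Cmod_triangle|].
  eapply Rle_trans; [apply Rplus_le_compat_r, Cmod_triangle|].
  assert (M * Cmod a <= M * e) by (apply Rmult_le_compat_l; lra).
  assert (M * Cmod b <= M * e) by (apply Rmult_le_compat_l; lra).
  assert (M * Cmod (b - a) <= M * (2 * e)) by (apply Rmult_le_compat_l; lra).
  lra.
Qed.

Lemma tri_int_cut_vertex x y s : in_disc x -> in_disc y -> 0 < s < 1 ->
  tri_int q 0 x y =
  (tri_int q 0 (RtoC s * x) (RtoC s * y) + tri_int q (RtoC s * x) x y
   + tri_int q (RtoC s * x) y (RtoC s * y))%C.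
Proof.
  intros Dx Dy Hs.
  assert (Ds : forall w, in_disc w -> in_disc (RtoC s * w)%C)
    by (intros w Dw; apply in_disc_ray; [exact Dw | lra]).
  set (a := (RtoC s * x)%C). set (b := (RtoC s * y)%C).
  assert (H0x : seg_int q 0 x = (seg_int q 0 a + seg_int q a x)%C).
  { rewrite (seg_int_split q 0 x s Hs) by (apply cont_on_seg_disc; auto using in_disc_0).
    replace (0 + RtoC s * (x - 0))%C with a by (unfold a; ring). reflexivity. }
  assert (Hy0 : seg_int q y 0 = (seg_int q y b + seg_int q b 0)%C).
  { rewrite (seg_int_split q y 0 (1 - s)) by (lra || apply cont_on_seg_disc; auto using in_disc_0).
    replace (y + RtoC (1 - s) * (0 - y))%C with b by (unfold b; C_field). reflexivity. }
  unfold tri_int. rewrite H0x, Hy0.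
  rewrite (seg_int_rev q a b), (seg_int_rev q a y) by (apply cont_on_seg_disc; unfold a, b; auto).
  ring.
Qed.

(* Goursat on [(e z0, z0, z)] and [(e z0, z, e z)], which avoid the possible
   singularity [0], leaves the triangle [(0, e z0, e z)] of size [O(e)]. *)
Lemma tri_int_vertex0 z0 z : in_disc z0 -> in_disc z -> 0 < Cdot z z0 -> z0 <> 0%C ->
  tri_int q 0 z0 z = 0%C.
Proof.
  intros D0 Dz Hdot Hz0. pose proof (Cmod_gt_0 z0) as [Hm _]. specialize (Hm Hz0).
  set (r := Rmax (Cmod z0) (Cmod z)). set (c := Rmin (Cmod z0 ^ 2) (Cdot z z0)).
  assert (Hr : r < 1) by (apply Rmax_lub_lt; auto).
  assert (Hc : 0 < c) by (apply Rmin_pos; [apply pow_lt|]; lra).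
  assert (Hc1 : c <= Cmod z0 ^ 2) by apply Rmin_l. assert (Hc2 : c <= Cdot z z0) by apply Rmin_r.
  destruct (Ccont_bounded_near q 0 (q_cont 0 in_disc_0)) as [r1 [M [Hr1 HM]]].
  assert (HM' : forall w, Cmod w < r1 -> Cmod (q w) <= M)
    by (intros w Hw; apply HM; replace (w - 0)%C with w by ring; exact Hw).
  apply (Cmod_le_eps_eq_0 _ (4 * M) (Rmin 1 r1)); [apply Rmin_pos; lra|].
  intros e [He He1].
  assert (He2 : e < 1) by (eapply Rlt_le_trans; [exact He1 | apply Rmin_l]).
  assert (He3 : e < r1) by (eapply Rlt_le_trans; [exact He1 | apply Rmin_r]).
  set (a := (RtoC e * z0)%C). set (b := (RtoC e * z)%C).
  assert (Ha : Cmod a = e * Cmod z0) by (unfold a; rewrite Cmod_mult, Cmod_R, Rabs_pos_eq; lra).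
  assert (Hb : Cmod b = e * Cmod z) by (unfold b; rewrite Cmod_mult, Cmod_R, Rabs_pos_eq; lra).
  pose proof (Cmod_ge_0 z).
  assert (Hr0 : Cmod z0 <= r) by apply Rmax_l. assert (Hrz : Cmod z <= r) by apply Rmax_r.
  assert (Da : in_disc a) by (unfold in_disc in *; nra).
  assert (Db : in_disc b) by (unfold in_disc in *; nra).
  set (Pe := disc_halfplane r z0 (e * c)).
  assert (HPe : forall w, Pe w -> exists l, Cdiff q w l).
  { intros w [Hw1 Hw2]. apply q_diff; [unfold in_disc; lra|]. intros ->.
    unfold Cdot in Hw2. simpl in Hw2. nra. }
  assert (Pa : Pe a) by (split; [rewrite Ha; nra | unfold a; rewrite Cdot_scal, Cdot_self; nra]).
  assert (Pb : Pe b) by (split; [rewrite Hb; nra | unfold b; rewrite Cdot_scal; nra]).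
  assert (Pz0 : Pe z0) by (split; [lra | rewrite Cdot_self; nra]).
  assert (Pz : Pe z) by (split; [lra | nra]).
  pose proof (goursat q Pe (disc_halfplane_convex _ _ _) (disc_halfplane_closed _ _ _) HPe) as G.
  rewrite (tri_int_cut_vertex z0 z e D0 Dz (conj He He2)). fold a b.
  rewrite (G a z0 z Pa Pz0 Pz), (G a z b Pa Pz Pb), !Cplus_0_r.
  apply (Cmod_tri_int_near0 a b r1 M e Da Db); [nra | nra | exact He3 | exact HM'].
Qed.

Lemma seg_int_increment z0 : in_disc z0 -> exists rho, 0 < rho /\
  forall z, Cmod (z - z0) < rho -> in_disc z /\ (seg_int q 0 z - seg_int q 0 z0)%C = seg_int q z0 z.
Proof.
  intros D0. destruct (Req_dec (Cmod z0) 0) as [E|Hm0].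
  { apply Cmod_eq_0 in E. subst z0. exists 1. split; [lra|]. intros z Hz. replace (z - 0)%C with z in Hz by ring.
    split; [exact Hz|]. rewrite seg_int_nil. ring. }
  assert (Hz0 : z0 <> 0%C) by (intros ->; apply Hm0, Cmod_0).
  pose proof (proj1 (Cmod_gt_0 z0) Hz0) as Hm.
  exists (Rmin (Cmod z0) (1 - Cmod z0)). split; [apply Rmin_pos; unfold in_disc in D0; lra|].
  intros z Hz.
  assert (Hz1 : Cmod (z - z0) < Cmod z0) by (eapply Rlt_le_trans; [exact Hz | apply Rmin_l]).
  assert (Hz2 : Cmod (z - z0) < 1 - Cmod z0) by (eapply Rlt_le_trans; [exact Hz | apply Rmin_r]).
  assert (Dz : in_disc z).
  { unfold in_disc. replace z with ((z - z0) + z0)%C by ring.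
    eapply Rle_lt_trans; [apply Cmod_triangle | lra]. }
  split; [exact Dz|].
  assert (Hdot : 0 < Cdot z z0).
  { replace (Cdot z z0) with (Cdot z0 z0 + Cdot (z - z0) z0) by (rewrite Cdot_minus; ring).
    rewrite Cdot_self. pose proof (Cdot_bound (z - z0) z0) as Hb. apply Rabs_le_between in Hb.
    pose proof (Cmod_ge_0 (z - z0)). nra. }
  pose proof (tri_int_vertex0 z0 z D0 Dz Hdot Hz0) as T. unfold tri_int in T.
  rewrite (seg_int_rev q 0 z) in T by (apply cont_on_seg_disc; auto using in_disc_0).
  transitivity (seg_int q 0 z - seg_int q 0 z0 + (seg_int q 0 z0 + seg_int q z0 z + - seg_int q 0 z))%C;
    [rewrite T | ]; ring.
Qed.

Lemma Cdiff_seg_int_from0 z0 : in_disc z0 -> Cdiff (seg_int q 0) z0 (q z0).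
Proof.
  intros D0 eps He.
  destruct (q_cont z0 D0 eps He) as [d [Hd Hq]].
  destruct (seg_int_increment z0 D0) as [rho [Hrho Hinc]].
  exists (Rmin rho d). split; [apply Rmin_pos; auto|]. intros z Hz.
  destruct (Hinc z (Rlt_le_trans _ _ _ Hz (Rmin_l _ _))) as [Dz ->].
  set (L := fun w : C => (q z0 + 0 * w)%C).
  assert (HL : forall x y, cont_on_seg L x y)
    by (intros x y t _; apply (Cdiff_cont _ _ 0%C), Cdiff_exact; intros w; unfold L; ring).
  replace (q z0 * (z - z0))%C with (seg_int L z0 z)
    by (unfold L; rewrite seg_int_affine; unfold Cdiv; ring).
  rewrite <- seg_int_minus by (apply cont_on_seg_disc || apply HL; auto).
  apply seg_int_bound.
  - intros t Ht. apply Ccont_minus; [apply cont_on_seg_disc | apply HL]; auto.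
  - intros t Ht. left. unfold L. rewrite Cmult_0_l, Cplus_0_r. apply Hq.
    replace (z0 + RtoC t * (z - z0) - z0)%C with (RtoC t * (z - z0))%C by ring.
    rewrite Cmod_mult, Cmod_R, Rabs_pos_eq by lra.
    assert (Cmod (z - z0) < d) by (eapply Rlt_le_trans; [exact Hz | apply Rmin_r]).
    pose proof (Cmod_ge_0 (z - z0)). nra.
Qed.

End Primitive.

(** * The Cesàro operator *)

Lemma Cderiv_spec f z l : is_derive f z l -> Cderiv f z = l.
Proof.
  intros H. unfold Cderiv.
  assert (H1 : is_derive f z (epsilon (inhabits (0%R, 0%R) : inhabited C) (fun l => is_derive f z l)))
    by (apply epsilon_spec; exists l; exact H).
  apply is_C_derive_unique in H. apply is_C_derive_unique in H1. congruence.
Qed.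

Lemma analytic_Cdiff f z : analytic_on_disc f -> in_disc z -> Cdiff f z (Cderiv f z).
Proof.
  intros Hf Hz. destruct (Hf z Hz) as [l Hl]. apply Cdiff_is_derive.
  rewrite (Cderiv_spec f z l Hl). exact Hl.
Qed.

(* The continuous extension of [f w / w] when [f 0 = 0]. *)
Definition slope0 (f : C -> C) (w : C) : C :=
  if Req_EM_T (Cmod w) 0 then Cderiv f 0%C else (f w / w)%C.

(* The integrand of [C_beta f] along rays, [f w / (w (1 - w)^beta)], extended
   continuously at [0]. *)
Definition cesaro_kernel (beta : R) (f : C -> C) (w : C) : C :=
  (slope0 f w * / cpow (1 - w) beta)%C.

Lemma slope0_nonzero (f : C -> C) (w : C) : w <> 0%C -> slope0 f w = (f w / w)%C.
Proof.
  intros Hw. unfold slope0. destruct (Req_EM_T (Cmod w) 0) as [E|E]; [|reflexivity].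
  exfalso. apply Hw, Cmod_eq_0, E.
Qed.

Lemma cesaro_kernel_nonzero (beta : R) (f : C -> C) (w : C) :
  in_disc w -> w <> 0%C -> cesaro_kernel beta f w = (f w / (w * cpow (1 - w) beta))%C.
Proof.
  intros Dw Hw. unfold cesaro_kernel. rewrite slope0_nonzero by exact Hw.
  pose proof (cpow_1_sub_neq_0 beta w Dw). field. auto.
Qed.

Lemma CRInt_is (g : R -> C) (I : C) : is_RInt_C g 0 1 I -> CRInt g 0 1 = I.
Proof.
  intros HI. unfold CRInt. apply injective_projections; simpl.
  - exact (is_RInt_unique _ _ _ _ (is_RInt_fct_extend_fst _ _ _ _ HI)).
  - exact (is_RInt_unique _ _ _ _ (is_RInt_fct_extend_snd _ _ _ _ HI)).
Qed.

Section Kernel.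

Variable f : C -> C.
Variable beta : R.
Hypothesis f_analytic : analytic_on_disc f.
Hypothesis f_0 : f 0%C = 0%C.

Lemma Ccont_slope0 : Ccont (slope0 f) 0%C.
Proof.
  pose proof (analytic_Cdiff f 0%C f_analytic in_disc_0) as Hd.
  intros eps He. destruct (Hd (eps / 2)) as [d [Hdpos H]]; [lra|].
  exists d. split; [exact Hdpos|]. intros y Hy. specialize (H y Hy).
  replace (y - 0)%C with y in Hy, H by ring.
  unfold slope0 at 2. rewrite Cmod_0. destruct (Req_EM_T 0 0) as [_|N]; [|lra].
  unfold slope0. destruct (Req_EM_T (Cmod y) 0) as [E|E].
  - replace (Cderiv f 0 - Cderiv f 0)%C with (RtoC 0) by ring. rewrite Cmod_0. exact He.
  - assert (Hy0 : y <> 0%C) by (intros ->; apply E, Cmod_0).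
    pose proof (proj1 (Cmod_gt_0 y) Hy0).
    rewrite f_0 in H.
    replace (f y / y - Cderiv f 0)%C with ((f y - 0 - Cderiv f 0 * y) / y)%C by (field; exact Hy0).
    rewrite Cmod_div by exact Hy0.
    apply Rle_lt_trans with (eps / 2); [|lra].
    apply Rmult_le_reg_r with (Cmod y); [lra|]. unfold Rdiv. rewrite Rmult_assoc, Rinv_l; lra.
Qed.

Lemma Cdiff_cpow_inv w : in_disc w -> exists l, Cdiff (fun y => / cpow (1 - y) beta)%C w l.
Proof.
  intros Dw. destruct (Cdiff_cpow_1_sub beta w Dw) as [l Hl]. eexists.
  apply (Cdiff_comp Cinv (fun y => cpow (1 - y) beta)); [|exact Hl].
  apply Cdiff_inv, cpow_1_sub_neq_0, Dw.
Qed.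

Lemma Cdiff_slope0 w : in_disc w -> w <> 0%C -> exists l, Cdiff (slope0 f) w l.
Proof.
  intros Dw Hw. pose proof (proj1 (Cmod_gt_0 w) Hw) as Hm. eexists.
  apply Cdiff_ext_loc with (f := fun y => (f y * / y)%C).
  - exists (Cmod w). split; [exact Hm|]. intros y Hy. symmetry. apply slope0_nonzero.
    intros ->. replace (0 - w)%C with (- w)%C in Hy by ring. rewrite Cmod_opp in Hy. lra.
  - apply Cdiff_mult; [apply analytic_Cdiff; auto | apply Cdiff_inv; exact Hw].
Qed.

Lemma Ccont_cesaro_kernel w : in_disc w -> Ccont (cesaro_kernel beta f) w.
Proof.
  intros Dw. apply Ccont_mult.
  - destruct (Req_dec (Cmod w) 0) as [E|E].
    + apply Cmod_eq_0 in E. subst w. exact Ccont_slope0.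
    + assert (Hw : w <> 0%C) by (intros ->; apply E, Cmod_0).
      destruct (Cdiff_slope0 w Dw Hw) as [l Hl]. exact (Cdiff_cont _ _ _ Hl).
  - destruct (Cdiff_cpow_inv w Dw) as [l Hl]. exact (Cdiff_cont _ _ _ Hl).
Qed.

Lemma Cdiff_cesaro_kernel w : in_disc w -> w <> 0%C ->
  exists l, Cdiff (cesaro_kernel beta f) w l.
Proof.
  intros Dw Hw. destruct (Cdiff_slope0 w Dw Hw) as [l1 H1].
  destruct (Cdiff_cpow_inv w Dw) as [l2 H2].
  eexists. exact (Cdiff_mult _ _ w _ _ H1 H2).
Qed.

Definition cesaro_integrand (z : C) (t : R) : C :=
  (f (RtoC t * z) / (RtoC t * z * cpow (1 - RtoC t * z) beta) * z)%C.

Lemma is_RInt_cesaro_integrand z : in_disc z ->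
  is_RInt_C (cesaro_integrand z) 0 1 (seg_int (cesaro_kernel beta f) 0 z).
Proof.
  intros Dz.
  pose proof (is_RInt_seg_int (cesaro_kernel beta f) 0 z
    (cont_on_seg_disc _ Ccont_cesaro_kernel 0 z in_disc_0 Dz)) as HI.
  eapply (@is_RInt_ext C_R_NormedModule); [|exact HI].
  intros t Ht. rewrite Rmin_left, Rmax_right in Ht by lra. unfold seg_integrand, cesaro_integrand.
  replace (0 + RtoC t * (z - 0))%C with (RtoC t * z)%C by ring.
  replace (z - 0)%C with z by ring.
  destruct (Req_dec (Cmod z) 0) as [E|E].
  { apply Cmod_eq_0 in E. subst z. change (@eq C (cesaro_kernel beta f (RtoC t * 0) * 0)
      (f (RtoC t * 0) / (RtoC t * 0 * cpow (1 - RtoC t * 0) beta) * 0))%C. ring. }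
  assert (Hz0 : z <> 0%C) by (intros ->; apply E, Cmod_0).
  assert (Htz : (RtoC t * z)%C <> 0%C).
  { apply Cmult_neq_0; [|exact Hz0]. intros H. apply RtoC_inj in H. lra. }
  assert (Dtz : in_disc (RtoC t * z)%C) by (apply in_disc_ray; [exact Dz | lra]).
  change (@eq C (cesaro_kernel beta f (RtoC t * z) * z)
    (f (RtoC t * z) / (RtoC t * z * cpow (1 - RtoC t * z) beta) * z))%C.
  rewrite cesaro_kernel_nonzero by assumption. reflexivity.
Qed.

Lemma cesaro_eq_seg_int z : in_disc z -> cesaro beta f z = seg_int (cesaro_kernel beta f) 0 z.
Proof. intros Dz. exact (CRInt_is _ _ (is_RInt_cesaro_integrand z Dz)). Qed.

Lemma cesaro_at_0 : cesaro beta f 0%C = 0%C.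
Proof. rewrite cesaro_eq_seg_int by exact in_disc_0. apply seg_int_nil. Qed.

Lemma Cdiff_cesaro z : in_disc z -> Cdiff (cesaro beta f) z (cesaro_kernel beta f z).
Proof.
  intros Dz. apply Cdiff_ext_loc with (f := seg_int (cesaro_kernel beta f) 0%C).
  - exists (1 - Cmod z). split; [unfold in_disc in Dz; lra|]. intros y Hy.
    symmetry. apply cesaro_eq_seg_int. unfold in_disc.
    replace y with ((y - z) + z)%C by ring. eapply Rle_lt_trans; [apply Cmod_triangle | lra].
  - apply Cdiff_seg_int_from0; [exact Ccont_cesaro_kernel | exact Cdiff_cesaro_kernel | exact Dz].
Qed.

End Kernel.

Lemma is_RInt_C_mult (a : C) (g : R -> C) (I : C) :
  is_RInt_C g 0 1 I -> is_RInt_C (fun t => a * g t)%C 0 1 (a * I)%C.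
Proof.
  intros HI.
  pose proof (is_RInt_fct_extend_fst _ _ _ _ HI) as H1.
  pose proof (is_RInt_fct_extend_snd _ _ _ _ HI) as H2.
  pose proof (@is_RInt_scal R_NormedModule _ _ _ (fst a) _ H1) as H1a.
  pose proof (@is_RInt_scal R_NormedModule _ _ _ (snd a) _ H1) as H1b.
  pose proof (@is_RInt_scal R_NormedModule _ _ _ (fst a) _ H2) as H2a.
  pose proof (@is_RInt_scal R_NormedModule _ _ _ (snd a) _ H2) as H2b.
  pose proof (@is_RInt_fct_extend_pair R_NormedModule R_NormedModule
    (fun t => a * g t)%C 0 1 _ _
    (@is_RInt_minus R_NormedModule _ _ _ _ _ _ H1a H2b)
    (@is_RInt_plus R_NormedModule _ _ _ _ _ _ H2a H1b)) as I3.
  replace (a * I)%C with (fst a * fst I - snd a * snd I, fst a * snd I + snd a * fst I) by C_field.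
  exact I3.
Qed.

Lemma cesaro_linear (beta : R) (f g : C -> C) (a b z : C) :
  analytic_on_disc f -> f 0%C = 0%C -> analytic_on_disc g -> g 0%C = 0%C -> in_disc z ->
  cesaro beta (fun w => a * f w + b * g w)%C z = (a * cesaro beta f z + b * cesaro beta g z)%C.
Proof.
  intros Hf Hf0 Hg Hg0 Dz.
  rewrite (cesaro_eq_seg_int f beta Hf Hf0 z Dz), (cesaro_eq_seg_int g beta Hg Hg0 z Dz).
  pose proof (is_RInt_C_mult a _ _ (is_RInt_cesaro_integrand f beta Hf Hf0 z Dz)) as I1.
  pose proof (is_RInt_C_mult b _ _ (is_RInt_cesaro_integrand g beta Hg Hg0 z Dz)) as I2.
  apply CRInt_is. eapply (@is_RInt_ext C_R_NormedModule);
    [|exact (@is_RInt_plus C_R_NormedModule _ _ _ _ _ _ I1 I2)].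
  intros t _. unfold cesaro_integrand. change (@eq C
    (a * (f (RtoC t * z) / (RtoC t * z * cpow (1 - RtoC t * z) beta) * z) +
     b * (g (RtoC t * z) / (RtoC t * z * cpow (1 - RtoC t * z) beta) * z))%C
    ((a * f (RtoC t * z) + b * g (RtoC t * z)) / (RtoC t * z * cpow (1 - RtoC t * z) beta) * z)%C).
  unfold Cdiv. ring.
Qed.

(** * Bloch-space estimates *)

Lemma Rpower_ge_base x a : 0 < x <= 1 -> 0 <= a <= 1 -> x <= Rpower x a.
Proof.
  intros Hx Ha. unfold Rpower. rewrite <- (exp_ln x) at 1 by lra. apply exp_le_of_le.
  assert (ln x <= 0) by (rewrite <- ln_1; apply ln_le; lra). nra.
Qed.

Lemma Rpower_le_1 a c : 0 <= c -> 0 < a <= 1 -> Rpower a c <= 1.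
Proof. intros. rewrite <- (Rpower_1_base c). apply Rle_Rpower_l; auto. Qed.

Lemma Rpower_Ropp_le x y a : 0 <= a -> 0 < x <= y -> Rpower y (- a) <= Rpower x (- a).
Proof.
  intros Ha Hxy. rewrite !Rpower_Ropp. apply Rinv_le_contravar; [apply Rpower_pos|].
  apply Rle_Rpower_l; lra.
Qed.

Lemma Rle_sub_of_deriv_le (phi psi dphi dpsi : R -> R) :
  (forall s, 0 <= s <= 1 -> derivable_pt_lim phi s (dphi s)) ->
  (forall s, 0 <= s <= 1 -> derivable_pt_lim psi s (dpsi s)) ->
  (forall s, 0 <= s <= 1 -> dphi s <= dpsi s) ->
  phi 1 - phi 0 <= psi 1 - psi 0.
Proof.
  intros Hphi Hpsi Hle.
  assert (Hd : forall s, 0 <= s <= 1 ->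
            derivable_pt_lim (fun x => phi x - psi x) s (dphi s - dpsi s))
    by (intros s Hs; apply derivable_pt_lim_minus; auto).
  destruct (MVT_gen (fun x => phi x - psi x) 0 1 (fun s => dphi s - dpsi s)) as [c [Hc E]].
  - intros x Hx. rewrite Rmin_left, Rmax_right in Hx by lra. apply is_derive_Reals, Hd. lra.
  - intros x Hx. rewrite Rmin_left, Rmax_right in Hx by lra.
    apply derivable_continuous_pt. eexists. apply Hd, Hx.
  - rewrite Rmin_left, Rmax_right in Hc by lra. specialize (Hle c Hc). nra.
Qed.

Lemma derivable_pt_lim_Re_ray (g : C -> C) (c z : C) (t : R) (l : C) :
  Cdiff g (RtoC t * z)%C l ->
  derivable_pt_lim (fun s => fst (c * g (RtoC s * z))%C) t (fst (c * (l * z))%C).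
Proof.
  intros Hg eps He.
  set (rho := Cmod z). assert (Hr : 0 <= rho) by apply Cmod_ge_0.
  set (K := Cmod c * rho + 1). assert (HK : 0 < K) by (unfold K; pose proof (Cmod_ge_0 c); nra).
  destruct (Hg (eps / (2 * K))) as [d [Hd H]]; [apply Rdiv_lt_0_compat; lra|].
  assert (Hd' : 0 < d / (rho + 1)) by (apply Rdiv_lt_0_compat; lra).
  exists (mkposreal _ Hd'). intros h Hh0 Hh. simpl in Hh.
  assert (Eh : (RtoC (t + h) * z - RtoC t * z)%C = (RtoC h * z)%C) by (rewrite RtoC_plus; ring).
  assert (Hhz : Cmod (RtoC h * z)%C < d).
  { rewrite Cmod_mult, Cmod_R. fold rho.
    apply Rmult_lt_compat_r with (r := rho + 1) in Hh; [|lra].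
    replace (d / (rho + 1) * (rho + 1)) with d in Hh by (field; lra).
    pose proof (Rabs_pos h). nra. }
  rewrite <- Eh in Hhz. specialize (H _ Hhz). rewrite Eh, Cmod_mult, Cmod_R in H. fold rho in H.
  replace ((fst (c * g (RtoC (t + h) * z))%C - fst (c * g (RtoC t * z))%C) / h - fst (c * (l * z))%C)
    with (fst (c * (g (RtoC (t + h) * z) - g (RtoC t * z) - l * (RtoC h * z)))%C / h)
    by (simpl; field; exact Hh0).
  unfold Rdiv. rewrite Rabs_mult, Rabs_inv.
  assert (Hh' : 0 < Rabs h) by (apply Rabs_pos_lt; exact Hh0).
  apply Rle_lt_trans with (Cmod c * (eps / (2 * K) * (Rabs h * rho)) * / Rabs h).
  { apply Rmult_le_compat_r; [apply Rlt_le, Rinv_0_lt_compat; exact Hh'|].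
    eapply Rle_trans; [apply (re_le_Cmod (c * _)) | rewrite Cmod_mult].
    apply Rmult_le_compat_l; [apply Cmod_ge_0 | exact H]. }
  replace (Cmod c * (eps / (2 * K) * (Rabs h * rho)) * / Rabs h)
    with (eps / (2 * K) * (Cmod c * rho)) by (field; lra).
  apply Rle_lt_trans with (eps / (2 * K) * K); [apply Rmult_le_compat_l; [apply Rlt_le, Rdiv_lt_0_compat; lra | unfold K; lra]|].
  replace (eps / (2 * K) * K) with (eps / 2) by (field; lra). lra.
Qed.

Lemma derivable_pt_lim_Rpower_decay (K rho g t : R) : 0 < 1 - t * rho ->
  derivable_pt_lim (fun s => K * (1 - Rpower (1 - s * rho) g)) t
    (K * (g * Rpower (1 - t * rho) (g - 1) * rho)).
Proof.
  intros Hu. apply derivable_pt_lim_scal.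
  replace (g * Rpower (1 - t * rho) (g - 1) * rho)
    with (0 - (g * Rpower (1 - t * rho) (g - 1)) * (- rho)) by ring.
  apply derivable_pt_lim_minus; [apply derivable_pt_lim_const|].
  apply (derivable_pt_lim_comp (fun s => 1 - s * rho) (fun x => Rpower x g));
    [|apply derivable_pt_lim_power; exact Hu].
  replace (- rho) with (0 - 1 * rho) by ring.
  apply derivable_pt_lim_minus; [apply derivable_pt_lim_const|].
  apply derivable_pt_lim_scal_right, derivable_pt_lim_id.
Qed.

Lemma bloch_weight_nonneg alpha g z : 0 <= bloch_weight alpha g z.
Proof. unfold bloch_weight. apply Rmult_le_pos; [apply Rlt_le, Rpower_pos | apply Cmod_ge_0]. Qed.

Lemma bloch_norm_spec alpha g : in_bloch alpha g ->
  (forall z, in_disc z -> bloch_weight alpha g z <= bloch_norm alpha g) /\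
  (forall K, (forall z, in_disc z -> bloch_weight alpha g z <= K) -> bloch_norm alpha g <= K).
Proof.
  intros [_ [M HM]]. unfold bloch_norm.
  set (E := fun x : R => exists z : C, in_disc z /\ x = bloch_weight alpha g z).
  destruct (Lub_Rbar_correct E) as [Hub Hleast].
  assert (HE0 : E (bloch_weight alpha g 0%C)) by (exists 0%C; split; [apply in_disc_0 | reflexivity]).
  assert (HubM : is_ub_Rbar E M) by (intros x [z [Hz ->]]; simpl; apply HM; auto).
  pose proof (Hub _ HE0) as H1. pose proof (Hleast _ HubM) as H2.
  destruct (Lub_Rbar E) as [l| |]; simpl in H1, H2; try contradiction.
  split.
  - intros z Hz. apply (Hub (bloch_weight alpha g z)). exists z. auto.
  - intros K HK. apply (Hleast K). intros x [z [Hz ->]]. simpl. apply HK, Hz.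
Qed.

Lemma Cmod_Cderiv_ray_le alpha N f z s :
  0 <= alpha -> 0 <= N -> (forall w, in_disc w -> bloch_weight alpha f w <= N) ->
  in_disc z -> 0 <= s <= 1 ->
  Cmod (Cderiv f (RtoC s * z)) <= N * Rpower (1 - s * Cmod z) (- alpha).
Proof.
  intros Ha HN0 HN Hz Hs. pose proof (HN _ (in_disc_ray z s Hz Hs)) as H. unfold bloch_weight in H.
  rewrite Cmod_mult, Cmod_R, Rabs_pos_eq in H by lra.
  assert (Hsz : 0 <= s * Cmod z < 1)
    by (pose proof (Cmod_ge_0 z); unfold in_disc in Hz; split; nra).
  set (w := Cderiv f (RtoC s * z)) in *. set (u := s * Cmod z) in *.
  pose proof (Rpower_pos (1 - u ^ 2) alpha).
  apply Rle_trans with (N * Rpower (1 - u ^ 2) (- alpha)).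
  - rewrite Rpower_Ropp. apply Rmult_le_reg_l with (Rpower (1 - u ^ 2) alpha); [lra|].
    replace (Rpower (1 - u ^ 2) alpha * (N * / Rpower (1 - u ^ 2) alpha)) with N
      by (field; lra).
    exact H.
  - apply Rmult_le_compat_l; [exact HN0|]. apply Rpower_Ropp_le; [exact Ha|]. split; nra.
Qed.

(* Compare [s |-> Re (conj (f z) f (s z))] with
   [s |-> |f z| N / (1 - alpha) * (1 - (1 - s |z|)^(1 - alpha))] on [0, 1]:
   the Bloch bound makes the first derivative the smaller one. *)
Lemma Cmod_sq_le_of_bloch_weight alpha N f z :
  0 < alpha < 1 -> 0 <= N -> analytic_on_disc f -> f 0%C = 0%C ->
  (forall w, in_disc w -> bloch_weight alpha f w <= N) -> in_disc z ->
  Cmod (f z) * Cmod (f z) <= Cmod (f z) * (N * Cmod z / (1 - alpha)).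
Proof.
  intros Ha HN0 Hf Hf0 HN Hz.
  set (rho := Cmod z). assert (Hr0 : 0 <= rho) by apply Cmod_ge_0. assert (Hr1 : rho < 1) by exact Hz.
  set (K := Cmod (f z) * N / (1 - alpha)).
  assert (HK : 0 <= K) by (apply Rdiv_le_0_compat; [apply Rmult_le_pos; [apply Cmod_ge_0 | lra] | lra]).
  pose proof (Rle_sub_of_deriv_le
    (fun s => fst (Cconj (f z) * f (RtoC s * z))%C)
    (fun s => K * (1 - Rpower (1 - s * rho) (1 - alpha)))
    (fun s => fst (Cconj (f z) * (Cderiv f (RtoC s * z) * z))%C)
    (fun s => K * ((1 - alpha) * Rpower (1 - s * rho) (1 - alpha - 1) * rho))) as Hcmp.
  cbv beta in Hcmp.
  assert (Hdcmp : forall s, 0 <= s <= 1 ->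
    fst (Cconj (f z) * (Cderiv f (RtoC s * z) * z))%C
    <= K * ((1 - alpha) * Rpower (1 - s * rho) (1 - alpha - 1) * rho)).
  { intros s Hs. replace (1 - alpha - 1) with (- alpha) by ring.
    replace (K * ((1 - alpha) * Rpower (1 - s * rho) (- alpha) * rho))
      with (Cmod (f z) * (N * Rpower (1 - s * rho) (- alpha) * rho)) by (unfold K; field; lra).
    eapply Rle_trans; [apply Rle_abs|]. eapply Rle_trans; [apply re_le_Cmod|].
    rewrite !Cmod_mult, Cmod_conj. fold rho.
    apply Rmult_le_compat_l; [apply Cmod_ge_0|]. apply Rmult_le_compat_r; [exact Hr0|].
    apply Cmod_Cderiv_ray_le; auto; lra. }
  specialize (Hcmp
    (fun s Hs => derivable_pt_lim_Re_ray f _ z s _ (analytic_Cdiff f _ Hf (in_disc_ray z s Hz Hs)))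
    (fun s Hs => derivable_pt_lim_Rpower_decay K rho (1 - alpha) s ltac:(nra)) Hdcmp).
  replace (RtoC 1 * z)%C with z in Hcmp by ring. replace (RtoC 0 * z)%C with (RtoC 0) in Hcmp by ring.
  rewrite Hf0, Rmult_0_l, Rminus_0_r, Rpower_1_base, Rmult_1_l in Hcmp.
  replace (fst (Cconj (f z) * f z)%C) with (Cmod (f z) * Cmod (f z)) in Hcmp
    by (rewrite Cmod_sq; unfold Cconj; simpl; ring).
  replace (fst (Cconj (f z) * 0)%C) with 0 in Hcmp by (simpl; ring).
  pose proof (Rpower_ge_base (1 - rho) (1 - alpha) ltac:(lra) ltac:(lra)).
  replace (Cmod (f z) * (N * rho / (1 - alpha))) with (K * rho) by (unfold K; field; lra).
  assert (K * (1 - Rpower (1 - rho) (1 - alpha)) <= K * rho) by (apply Rmult_le_compat_l; lra).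
  lra.
Qed.

Lemma Cmod_le_of_bloch_weight alpha N f z :
  0 < alpha < 1 -> analytic_on_disc f -> f 0%C = 0%C ->
  (forall w, in_disc w -> bloch_weight alpha f w <= N) -> in_disc z ->
  Cmod (f z) <= N * Cmod z / (1 - alpha).
Proof.
  intros Ha Hf Hf0 HN Hz.
  assert (HN0 : 0 <= N) by (eapply Rle_trans; [apply bloch_weight_nonneg | apply (HN 0%C in_disc_0)]).
  pose proof (Cmod_sq_le_of_bloch_weight alpha N f z Ha HN0 Hf Hf0 HN Hz) as Hsq.
  assert (0 <= N * Cmod z / (1 - alpha))
    by (apply Rdiv_le_0_compat; [apply Rmult_le_pos; [lra | apply Cmod_ge_0] | lra]).
  pose proof (Cmod_ge_0 (f z)).
  destruct (Req_dec (Cmod (f z)) 0) as [E|E]; [lra | nra].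
Qed.

Lemma Cmod_1_sub_bounds (z : C) : in_disc z -> 1 - Cmod z <= Cmod (1 - z) <= 2.
Proof.
  unfold in_disc. intros Hz. split.
  - pose proof (Cmod_sub_ge 1 z). rewrite Cmod_1 in *. lra.
  - unfold Cminus. eapply Rle_trans; [apply Cmod_triangle|]. rewrite Cmod_1, Cmod_opp. lra.
Qed.

(* For [beta >= 0] use [1 - |z|^2 <= 2 (1 - |z|) <= 2 |1 - z|] and [alpha >= beta];
   for [beta < 0] use [|1 - z| <= 2]. *)
Lemma weight_ratio_bound (alpha beta : R) (z : C) : 0 < alpha < 1 -> beta <= alpha -> in_disc z ->
  Rpower (1 - Cmod z ^ 2) alpha / Rpower (Cmod (1 - z)) beta <= 2 + Rpower 2 (- beta).
Proof.
  intros Ha Hb Hz. pose proof (Cmod_1_sub_bounds z Hz) as [Hu1 Hu2].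
  set (rho := Cmod z) in *. set (u := Cmod (1 - z)) in *.
  assert (Hr0 : 0 <= rho) by apply Cmod_ge_0. assert (Hr1 : rho < 1) by exact Hz.
  pose proof (Rpower_pos 2 (- beta)) as P2. pose proof (Rpower_pos (1 - rho ^ 2) alpha) as Pw.
  pose proof (Rpower_pos u (- beta)) as Pu.
  unfold Rdiv. rewrite <- Rpower_Ropp.
  destruct (Rle_dec 0 beta) as [Hbp|Hbn].
  - set (s := 1 - rho).
    assert (H1 : Rpower (1 - rho ^ 2) alpha <= Rpower 2 alpha * Rpower s alpha).
    { rewrite Rpower_mult_distr by (unfold s; lra). apply Rle_Rpower_l; [lra|]. unfold s. nra. }
    assert (H2 : Rpower u (- beta) <= Rpower s (- beta)) by (apply Rpower_Ropp_le; unfold s; lra).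
    assert (H3 : Rpower s alpha * Rpower s (- beta) <= 1)
      by (rewrite <- Rpower_plus; apply Rpower_le_1; unfold s; lra).
    assert (H4 : Rpower 2 alpha <= 2)
      by (rewrite <- (Rpower_1 2) at 2 by lra; apply Rle_Rpower; lra).
    pose proof (Rpower_pos s alpha). pose proof (Rpower_pos s (- beta)).
    pose proof (Rpower_pos 2 alpha).
    apply Rle_trans with (Rpower 2 alpha * Rpower s alpha * Rpower s (- beta));
      [apply Rmult_le_compat; lra|].
    rewrite Rmult_assoc. nra.
  - assert (H1 : Rpower (1 - rho ^ 2) alpha <= 1) by (apply Rpower_le_1; nra).
    assert (H2 : Rpower u (- beta) <= Rpower 2 (- beta)) by (apply Rle_Rpower_l; lra).
    apply Rle_trans with (1 * Rpower 2 (- beta)); [apply Rmult_le_compat; lra | lra].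
Qed.

Definition cesaro_const (alpha beta : R) : R := (2 + Rpower 2 (- beta)) / (1 - alpha).

Lemma cesaro_const_ge_1 alpha beta : 0 < alpha < 1 -> 1 <= cesaro_const alpha beta.
Proof.
  intros Ha. unfold cesaro_const. pose proof (Rpower_pos 2 (- beta)).
  apply Rmult_le_reg_r with (1 - alpha); [lra|]. unfold Rdiv.
  rewrite Rmult_assoc, Rinv_l by lra. nra.
Qed.

Lemma bloch_weight_cesaro_le alpha beta f z :
  0 < alpha < 1 -> beta <= alpha -> in_bloch0 alpha f -> in_disc z ->
  bloch_weight alpha (cesaro beta f) z <= cesaro_const alpha beta * bloch_norm alpha f.
Proof.
  intros Ha Hb [Hbf Hf0] Hz. pose proof Hbf as [Hf _]. change (f 0%C = 0%C) in Hf0.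
  destruct (bloch_norm_spec alpha f Hbf) as [HN _]. set (N := bloch_norm alpha f) in *.
  assert (HN0 : 0 <= N) by (eapply Rle_trans; [apply bloch_weight_nonneg | apply (HN 0%C in_disc_0)]).
  pose proof (cesaro_const_ge_1 alpha beta Ha) as HK.
  unfold bloch_weight.
  rewrite (Cderiv_spec _ _ _ (proj1 (Cdiff_is_derive _ _ _) (Cdiff_cesaro f beta Hf Hf0 z Hz))).
  destruct (Req_dec (Cmod z) 0) as [E|E].
  - apply Cmod_eq_0 in E. subst z. specialize (HN 0%C in_disc_0).
    unfold cesaro_kernel, slope0, bloch_weight in *. rewrite Cmod_0 in *.
    destruct (Req_EM_T 0 0) as [_|]; [|lra].
    replace (RtoC 1 - RtoC 0)%C with (RtoC 1) by ring. rewrite cpow_1.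
    replace (Cderiv f 0 * / RtoC 1)%C with (Cderiv f 0) by (field; apply C1_neq_C0). nra.
  - assert (Hz0 : z <> 0%C) by (intros ->; apply E, Cmod_0).
    assert (Hu : Cmod (1 - z) <> 0) by (pose proof (Cmod_1_sub_bounds z Hz); unfold in_disc in Hz; lra).
    pose proof (cpow_1_sub_neq_0 beta z Hz).
    rewrite cesaro_kernel_nonzero, Cmod_div, Cmod_mult, Cmod_cpow by
      (auto || apply Cmult_neq_0; auto).
    pose proof (Cmod_le_of_bloch_weight alpha N f z Ha Hf Hf0 HN Hz) as Hfz.
    pose proof (weight_ratio_bound alpha beta z Ha Hb Hz) as Hrat.
    set (P1 := Rpower (1 - Cmod z ^ 2) alpha) in *. set (P2 := Rpower (Cmod (1 - z)) beta) in *.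
    assert (HP1 : 0 < P1) by apply Rpower_pos. assert (HP2 : 0 < P2) by apply Rpower_pos.
    assert (Hzp : 0 < Cmod z) by (apply Cmod_gt_0; exact Hz0).
    assert (Hq : Cmod (f z) / (Cmod z * P2) <= N / (1 - alpha) / P2).
    { unfold Rdiv. rewrite Rinv_mult.
      apply Rle_trans with (N * Cmod z / (1 - alpha) * / Cmod z * / P2).
      - rewrite <- Rmult_assoc. apply Rmult_le_compat_r; [apply Rlt_le, Rinv_0_lt_compat; lra|].
        apply Rmult_le_compat_r; [apply Rlt_le, Rinv_0_lt_compat; lra | exact Hfz].
      - right. field. lra. }
    apply Rle_trans with (P1 * (N / (1 - alpha) / P2)); [apply Rmult_le_compat_l; lra|].
    replace (P1 * (N / (1 - alpha) / P2)) with (N / (1 - alpha) * (P1 / P2)) by (field; lra).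
    replace (cesaro_const alpha beta * N) with (N / (1 - alpha) * (2 + Rpower 2 (- beta)))
      by (unfold cesaro_const; field; lra).
    apply Rmult_le_compat_l; [apply Rdiv_le_0_compat; lra | exact Hrat].
Qed.

Theorem theorem2p2 (alpha beta : R) :
  0 < alpha -> beta <= alpha -> alpha < 1 ->
  (* C_beta maps B_alpha^0 into B_alpha^0 *)
  (forall f : C -> C, in_bloch0 alpha f -> in_bloch0 alpha (cesaro beta f)) /\
  (* C_beta is linear on B_alpha^0 (as functions on the disc) *)
  (forall (f g : C -> C) (a b : C),
      in_bloch0 alpha f -> in_bloch0 alpha g ->
      forall z : C, in_disc z ->
        cesaro beta (fun w => (a * f w + b * g w)%C) z =
        (a * cesaro beta f z + b * cesaro beta g z)%C) /\
  (* C_beta is bounded for the norm ||.||_{B_alpha} *)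
  (exists K : R, 0 <= K /\
     forall f : C -> C, in_bloch0 alpha f ->
       bloch_norm alpha (cesaro beta f) <= K * bloch_norm alpha f).
Proof.
  intros Ha Hb Ha1.
  assert (Hmaps : forall f, in_bloch0 alpha f -> in_bloch0 alpha (cesaro beta f)).
  { intros f Hf. pose proof Hf as [[Han _] Hf0]. split; [split|].
    - intros z Hz. exists (cesaro_kernel beta f z).
      apply Cdiff_is_derive, Cdiff_cesaro; auto.
    - exists (cesaro_const alpha beta * bloch_norm alpha f). intros z Hz.
      apply bloch_weight_cesaro_le; auto.
    - apply cesaro_at_0; auto. }
  split; [exact Hmaps|]. split.
  - intros f g a b [[Hf _] Hf0] [[Hg _] Hg0] z Hz. apply cesaro_linear; auto.
  - exists (cesaro_const alpha beta). split; [pose proof (cesaro_const_ge_1 alpha beta); lra|].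
    intros f Hf. apply (proj2 (bloch_norm_spec alpha _ (proj1 (Hmaps f Hf)))).
    intros z Hz. apply bloch_weight_cesaro_le; auto.
Qed.
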